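(* Let $X$ be a real Banach space, $f\in\Gamma_0(X)$, $S_f\ne\emptyset$, and $0<\varepsilon<|\partial f|_{\rm bd}$. Then for every $g\in\mathrm{Ptb}(f,\varepsilon)$ and every $u\in X$ with $g(u)>0$, every $x^*\in\partial g(u)$ satisfies $\|x^*\|\ge|\partial f|_{\rm bd}-\varepsilon$; consequently $\mathrm{Er}\{\mathrm{Ptb}(f,\varepsilon)\}\ge|\partial f|_{\rm bd}-\varepsilon>0$.
   Context: $\Gamma_0(X)$: proper convex lsc extended-real-valued functions on $X$. For convex $f$, $\partial f(x):=\{x^*\in X^*\mid \langle x^*,u-x\rangle\le f(u)-f(x)\ \forall u\in X\}$. $d(x,S)=\inf_{u\in S}\|u-x\|$, $d(x,\emptyset)=+\infty$, $\inf\emptyset=+\infty$. $S_f:=\{x\mid f(x)\le0\}$, $S_f^=:=\{x\mid f(x)=0\}$. $\mathrm{Er}\,g:=\inf_{g(x)>0}\frac{g(x)}{d(x,S_g)}$. $|\partial f|_{\rm bd}:=\inf_{f(x)=0} d(0,\mathrm{bd}\,\partial f(x))$. For $x\in S_f^=$, $\varepsilon,\delta\ge0$: $\tau(f,x,\varepsilon,\delta):=\inf_{u:\,f(u)\ge-\varepsilon\|u-x\|-\delta} d(0,\partial f(u))$ if $0\notin\mathrm{int}\,\partial f(x)$, and $:=d(0,\mathrm{bd}\,\partial f(x))$ if $0\in\mathrm{int}\,\partial f(x)$. $g\in\mathrm{Ptb}(f,\varepsilon)$ means: $S_g\ne\emptyset$, $g=f+p$ with $p:X\to\mathbb{R}$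 convex, and there exist $x\in S_f^=$ and $\xi\ge0$ with $\xi+|\partial f|_{\rm bd}-\tau(f,x,\xi,|p(x)|)\le\varepsilon$ and $|p(u)-p(x)|\le\xi\|u-x\|$ for all $u\in X$. $\mathrm{Er}\{\mathrm{Ptb}(f,\varepsilon)\}:=\inf_{g\in\mathrm{Ptb}(f,\varepsilon)}\mathrm{Er}\,g$. *)

From Stdlib Require Import Reals Lra Classical ClassicalEpsilon.
Open Scope R_scope.

Record Banach := {
  carrier :> Type;
  vzero : carrier;
  vadd : carrier -> carrier -> carrier;
  vopp : carrier -> carrier;
  vscal : R -> carrier -> carrier;
  vnorm : carrier -> R;
  vadd_assoc : forall x y z, vadd x (vadd y z) = vadd (vadd x y) z;
  vadd_comm : forall x y, vadd x y = vadd y x;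
  vadd_zero : forall x, vadd x vzero = x;
  vadd_opp : forall x, vadd x (vopp x) = vzero;
  vscal_assoc : forall a b x, vscal a (vscal b x) = vscal (a * b) x;
  vscal_one : forall x, vscal 1 x = x;
  vscal_distr_l : forall a x y, vscal a (vadd x y) = vadd (vscal a x) (vscal a y);
  vscal_distr_r : forall a b x, vscal (a + b) x = vadd (vscal a x) (vscal b x);
  vnorm_nonneg : forall x, 0 <= vnorm x;
  vnorm_eq0 : forall x, vnorm x = 0 <-> x = vzero;
  vnorm_scal : forall a x, vnorm (vscal a x) = Rabs a * vnorm x;
  vnorm_triangle : forall x y, vnorm (vadd x y) <= vnorm x + vnorm y;
  vcomplete : forall s : nat -> carrier,
      (forall e, 0 < e -> exists N, forall m n, (N <= m)%nat -> (N <= n)%nat ->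
          vnorm (vadd (s m) (vopp (s n))) < e) ->
      exists l, forall e, 0 < e -> exists N, forall n, (N <= n)%nat ->
          vnorm (vadd (s n) (vopp l)) < e
}.

Arguments vzero {_}. Arguments vadd {_}. Arguments vopp {_}.
Arguments vscal {_}. Arguments vnorm {_}.

Definition vsub {X : Banach} (x y : X) : X := vadd x (vopp y).

Inductive ER := Fin (r : R) | PInf.

Definition ele (a b : ER) : Prop :=
  match a, b with
  | _, PInf => True
  | PInf, Fin _ => False
  | Fin x, Fin y => x <= y
  end.
Definition elt (a b : ER) : Prop :=
  match a, b with
  | PInf, _ => False
  | Fin _, PInf => True
  | Fin x, Fin y => x < y
  end.
Definition eaddR (a : ER) (r : R) : ER :=
  match a with Fin x => Fin (x + r) | PInf => PInf end.
Definition esubR (a : ER) (r : R) : ER := eaddR a (- r).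

(** Infimum in [-oo?,+oo]: the greatest lower bound in ER; inf of the empty set
    is +oo.  (All sets used below are bounded below by 0, so the glb exists.) *)
Definition is_einf (E : ER -> Prop) (m : ER) : Prop :=
  (forall y, E y -> ele m y) /\
  (forall m', (forall y, E y -> ele m' y) -> ele m' m).

Definition einf (E : ER -> Prop) : ER :=
  match excluded_middle_informative (exists m, is_einf E m) with
  | left h => proj1_sig (constructive_indefinite_description _ h)
  | right _ => PInf
  end.

Definition dist {X : Banach} (x : X) (S : X -> Prop) : ER :=
  einf (fun y => exists u, S u /\ y = Fin (vnorm (vsub u x))).

Definition is_dual {X : Banach} (phi : X -> R) : Prop :=
  (forall x y, phi (vadd x y) = phi x + phi y) /\
  (forall a x, phi (vscal a x) = a * phi x) /\
  (exists c, forall x, Rabs (phi x) <= c * vnorm x).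

Definition dnorm {X : Banach} (phi : X -> R) : ER :=
  einf (fun y => exists c, y = Fin c /\ 0 <= c /\
                    forall x, Rabs (phi x) <= c * vnorm x).

Definition dsub {X : Banach} (psi phi : X -> R) : X -> R := fun u => psi u - phi u.
Definition dzero {X : Banach} : X -> R := fun _ => 0.

Definition dinterior {X : Banach} (A : (X -> R) -> Prop) (phi : X -> R) : Prop :=
  is_dual phi /\ exists r, 0 < r /\
    forall psi, is_dual psi -> elt (dnorm (dsub psi phi)) (Fin r) -> A psi.
Definition dclosure {X : Banach} (A : (X -> R) -> Prop) (phi : X -> R) : Prop :=
  is_dual phi /\ forall r, 0 < r ->
    exists psi, A psi /\ elt (dnorm (dsub psi phi)) (Fin r).
Definition dboundary {X : Banach} (A : (X -> R) -> Prop) (phi : X -> R) : Prop :=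
  dclosure A phi /\ ~ dinterior A phi.

Definition ddist0 {X : Banach} (A : (X -> R) -> Prop) : ER :=
  einf (fun y => exists phi, A phi /\ y = dnorm phi).

Definition proper {X : Banach} (f : X -> ER) : Prop := exists x, f x <> PInf.
Definition convexE {X : Banach} (f : X -> ER) : Prop :=
  forall x y fx fy t, f x = Fin fx -> f y = Fin fy -> 0 <= t <= 1 ->
    ele (f (vadd (vscal t x) (vscal (1 - t) y))) (Fin (t * fx + (1 - t) * fy)).
Definition lscE {X : Banach} (f : X -> ER) : Prop :=
  forall x c, elt (Fin c) (f x) ->
    exists d, 0 < d /\ forall u, vnorm (vsub u x) < d -> elt (Fin c) (f u).
Definition Gamma0 {X : Banach} (f : X -> ER) : Prop :=
  proper f /\ convexE f /\ lscE f.

Definition convexR {X : Banach} (p : X -> R) : Prop :=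
  forall x y t, 0 <= t <= 1 ->
    p (vadd (vscal t x) (vscal (1 - t) y)) <= t * p x + (1 - t) * p y.

Definition subdiff {X : Banach} (f : X -> ER) (x : X) (phi : X -> R) : Prop :=
  is_dual phi /\ exists fx, f x = Fin fx /\
    forall u, match f u with
              | Fin fu => phi (vsub u x) <= fu - fx
              | PInf => True
              end.

Definition sublevel {X : Banach} (f : X -> ER) (x : X) : Prop := ele (f x) (Fin 0).

(** a / d with a > 0 real and d in [0,+oo]: a/0 = +oo, a/+oo = 0 *)
Definition ediv (a : R) (d : ER) : ER :=
  match d with
  | PInf => Fin 0
  | Fin r => if Rlt_dec 0 r then Fin (a / r) else PInf
  end.

Definition Er {X : Banach} (g : X -> ER) : ER :=
  einf (fun y => exists x gx, g x = Fin gx /\ 0 < gx /\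
                              y = ediv gx (dist x (sublevel g))).

Definition bdsub {X : Banach} (f : X -> ER) : ER :=
  einf (fun y => exists x, f x = Fin 0 /\ y = ddist0 (dboundary (subdiff f x))).

Definition tau {X : Banach} (f : X -> ER) (x : X) (eps delta : R) : ER :=
  match excluded_middle_informative (dinterior (subdiff f x) dzero) with
  | left _ => ddist0 (dboundary (subdiff f x))
  | right _ => einf (fun y => exists u,
        ele (Fin (- eps * vnorm (vsub u x) - delta)) (f u) /\
        y = ddist0 (subdiff f u))
  end.

(** the inequality  xi + |df|_bd - tau <= eps  in extended arithmetic:
    +oo - (anything) is not <= eps, and b - (+oo) = -oo <= eps for b finite *)
Definition ptb_ineq (xi : R) (b t : ER) (eps : R) : Prop :=
  match b with
  | PInf => False
  | Fin b' => match t with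
              | PInf => True
              | Fin t' => xi + b' - t' <= eps
              end
  end.

Definition Ptb {X : Banach} (f : X -> ER) (eps : R) (g : X -> ER) : Prop :=
  (exists x, sublevel g x) /\
  exists p : X -> R, convexR p /\ (forall u, g u = eaddR (f u) (p u)) /\
  exists x xi, f x = Fin 0 /\ 0 <= xi /\
    ptb_ineq xi (bdsub f) (tau f x xi (Rabs (p x))) eps /\
    forall u, Rabs (p u - p x) <= xi * vnorm (vsub u x).

Definition ErPtb {X : Banach} (f : X -> ER) (eps : R) : ER :=
  einf (fun y => exists g, Ptb f eps g /\ y = Er g).

From Pilot Require Import Defs.
From Stdlib Require Import Reals Lra Lia Classical ClassicalEpsilon FunctionalExtensionality List.
From mathcomp Require boolp classical_sets.
Set Bullet Behavior "Strict Subproofs".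
Open Scope R_scope.

(** Write [g = f + p] with [p] convex and [xi]-calm at the zero [x] of [f], hence
    [xi]-Lipschitz.  By the sum rule (a form of Hahn--Banach), a subgradient [x*] of [g] at
    [u] is [y + z] with [y] in [df(u)] and [|z| <= xi].
    If [0] is interior to [df(x)], closedness of [df(x)] puts the whole ball of radius
    [|df|_bd] inside it, so [f] grows at that rate away from its unique zero [x]; tested
    against [y] this gives [|x*| >= |df|_bd - xi], and the perturbation inequality reads
    [xi <= eps].  Otherwise [g(u) > 0] puts [u] in the set defining [tau(f, x, xi, |p x|)],
    so [|y| >= tau] and the perturbation inequality gives the bound directly.
    For the error bound, if [g(u) < k d(u, S_g)] with [k < |df|_bd - eps], Ekeland's
    principle gives a point [z] outside [S_g] minimising [g + k |. - z|] locally, hence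
    globally by convexity: a subgradient of norm [<= k] at a point where [g > 0],
    which the first part excludes. *)

Arguments vadd_assoc {_}. Arguments vadd_comm {_}. Arguments vadd_zero {_}.
Arguments vadd_opp {_}. Arguments vscal_assoc {_}. Arguments vscal_one {_}.
Arguments vscal_distr_l {_}. Arguments vscal_distr_r {_}. Arguments vnorm_nonneg {_}.
Arguments vnorm_eq0 {_}. Arguments vnorm_scal {_}. Arguments vnorm_triangle {_}.
Arguments vcomplete {_}.

Section VectorAlgebra.
Context {X : Banach}.
Implicit Types x y z : X.

Lemma vadd_0l x : vadd vzero x = x.
Proof. rewrite vadd_comm. apply vadd_zero. Qed.

Lemma vadd_reg_l x y z : vadd x y = vadd x z -> y = z.
Proof.
  intro H.
  assert (H2 : vadd (vopp x) (vadd x y) = vadd (vopp x) (vadd x z)) by now rewrite H.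
  rewrite !vadd_assoc, (vadd_comm (vopp x) x), vadd_opp, !vadd_0l in H2. exact H2.
Qed.

Lemma vscal_0l x : vscal 0 x = vzero.
Proof.
  apply (vadd_reg_l (vscal 0 x)). rewrite vadd_zero, <- vscal_distr_r.
  now rewrite Rplus_0_r.
Qed.

Lemma vscal_0r a : vscal a (@vzero X) = vzero.
Proof.
  apply (vadd_reg_l (vscal a vzero)). rewrite vadd_zero, <- vscal_distr_l.
  now rewrite vadd_zero.
Qed.

Lemma vopp_vscal x : vopp x = vscal (-1) x.
Proof.
  apply (vadd_reg_l x). rewrite vadd_opp, <- (vscal_one x) at 1.
  rewrite <- vscal_distr_r. replace (1 + -1) with 0 by ring. now rewrite vscal_0l.
Qed.

Lemma vadd_vaddACA x y z (w : X) :
  vadd (vadd x y) (vadd z w) = vadd (vadd x z) (vadd y w).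
Proof.
  rewrite <- !vadd_assoc. f_equal. rewrite !vadd_assoc. f_equal. apply vadd_comm.
Qed.

End VectorAlgebra.

(** A reflexive decision procedure for identities between linear combinations:
    a term over atoms [x_0, x_1, ...] is normalised to its list of coefficients. *)
Inductive lterm :=
  | LAtom (n : nat) | LZero | LAdd (a b : lterm) | LOpp (a : lterm) | LScal (r : R) (a : lterm).

Fixpoint lterm_eval {X : Banach} (env : list X) (e : lterm) : X :=
  match e with
  | LAtom n => nth n env vzero
  | LZero => vzero
  | LAdd a b => vadd (lterm_eval env a) (lterm_eval env b)
  | LOpp a => vopp (lterm_eval env a)
  | LScal r a => vscal r (lterm_eval env a)
  end.

Fixpoint coef_add (l1 l2 : list R) : list R :=
  match l1, l2 with
  | nil, _ => l2
  | _, nil => l1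
  | a :: l1', b :: l2' => (a + b) :: coef_add l1' l2'
  end.

Fixpoint coefs (e : lterm) : list R :=
  match e with
  | LAtom n => repeat 0 n ++ (1 :: nil)
  | LZero => nil
  | LAdd a b => coef_add (coefs a) (coefs b)
  | LOpp a => map (fun c => - c) (coefs a)
  | LScal r a => map (fun c => r * c) (coefs a)
  end.

Fixpoint lincomb {X : Banach} (env : list X) (l : list R) : X :=
  match env, l with
  | v :: env', c :: l' => vadd (vscal c v) (lincomb env' l')
  | _, _ => vzero
  end.

Fixpoint all_zero (l : list R) : Prop :=
  match l with nil => True | a :: l' => a = 0 /\ all_zero l' end.

Fixpoint coef_eq (l1 l2 : list R) : Prop :=
  match l1, l2 with
  | nil, _ => all_zero l2
  | a :: l1', nil => a = 0 /\ all_zero l1'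
  | a :: l1', b :: l2' => a = b /\ coef_eq l1' l2'
  end.

Section LinearCombinations.
Context {X : Banach}.
Implicit Types env : list X.

Lemma lincomb_nil env : lincomb env nil = vzero.
Proof. destruct env; reflexivity. Qed.

Lemma lincomb_add env l1 l2 :
  lincomb env (coef_add l1 l2) = vadd (lincomb env l1) (lincomb env l2).
Proof.
  revert l1 l2; induction env as [|v env IH]; intros [|a l1] [|b l2]; simpl;
    rewrite ?vadd_zero, ?vadd_0l; try reflexivity.
  rewrite IH, vscal_distr_r. apply vadd_vaddACA.
Qed.

Lemma lincomb_scal env r l :
  lincomb env (map (fun c => r * c) l) = vscal r (lincomb env l).
Proof.
  revert l; induction env as [|v env IH]; intros [|a l]; simpl;
    rewrite ?vscal_0r; try reflexivity.
  now rewrite IH, vscal_distr_l, vscal_assoc.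
Qed.

Lemma lincomb_opp env l : lincomb env (map (fun c => - c) l) = vopp (lincomb env l).
Proof.
  rewrite vopp_vscal, <- lincomb_scal. f_equal. apply map_ext. intro; ring.
Qed.

Lemma lincomb_atom env n : lincomb env (repeat 0 n ++ (1 :: nil)) = nth n env vzero.
Proof.
  revert n; induction env as [|v env IH]; intros [|n]; simpl; try reflexivity.
  - now rewrite vscal_one, lincomb_nil, vadd_zero.
  - now rewrite IH, vscal_0l, vadd_0l.
Qed.

Lemma lterm_eval_coefs env e : lterm_eval env e = lincomb env (coefs e).
Proof.
  induction e; simpl.
  - now rewrite lincomb_atom.
  - now rewrite lincomb_nil.
  - now rewrite lincomb_add, IHe1, IHe2.
  - now rewrite lincomb_opp, IHe.
  - now rewrite lincomb_scal, IHe.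
Qed.

Lemma lincomb_all_zero env l : all_zero l -> lincomb env l = vzero.
Proof.
  revert l; induction env as [|v env IH]; intros [|a l] H; simpl; try reflexivity.
  destruct H as [-> H]. now rewrite vscal_0l, IH, vadd_zero.
Qed.

Lemma lincomb_coef_eq env l1 l2 : coef_eq l1 l2 -> lincomb env l1 = lincomb env l2.
Proof.
  revert l1 l2; induction env as [|v env IH]; intros [|a l1] [|b l2] H; simpl in H |- *;
    try reflexivity.
  - destruct H as [-> H]. rewrite vscal_0l, vadd_0l. symmetry. now apply lincomb_all_zero.
  - destruct H as [-> H]. rewrite vscal_0l, vadd_0l. now apply lincomb_all_zero.
  - destruct H as [-> H]. f_equal. now apply IH.
Qed.

End LinearCombinations.

Ltac list_index x l :=
  match l with
  | x :: _ => constr:(0%nat)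
  | _ :: ?l' => let n := list_index x l' in constr:(S n)
  end.

Ltac lterm_atoms t env :=
  match t with
  | vzero => env
  | vadd ?a ?b => let e1 := lterm_atoms a env in lterm_atoms b e1
  | vsub ?a ?b => let e1 := lterm_atoms a env in lterm_atoms b e1
  | vopp ?a => lterm_atoms a env
  | vscal _ ?a => lterm_atoms a env
  | _ => match env with
         | context [t] => env
         | _ => constr:(t :: env)
         end
  end.

Ltac lterm_reify env t :=
  match t with
  | vzero => constr:(LZero)
  | vadd ?a ?b =>
      let ra := lterm_reify env a in let rb := lterm_reify env b in constr:(LAdd ra rb)
  | vsub ?a ?b =>
      let ra := lterm_reify env a in let rb := lterm_reify env b in constr:(LAdd ra (LOpp rb))
  | vopp ?a => let ra := lterm_reify env a in constr:(LOpp ra)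
  | vscal ?r ?a => let ra := lterm_reify env a in constr:(LScal r ra)
  | _ => let n := list_index t env in constr:(LAtom n)
  end.

(** Coefficient equations that [ring] cannot close are left as goals. *)
Ltac vring :=
  match goal with
  | |- @eq (carrier ?X) ?a ?b =>
    let e0 := lterm_atoms a (@nil (carrier X)) in
    let env := lterm_atoms b e0 in
    let ra := lterm_reify env a in
    let rb := lterm_reify env b in
    change (lterm_eval env ra = lterm_eval env rb);
    rewrite !lterm_eval_coefs; apply lincomb_coef_eq; simpl; repeat split; try ring
  end.

Lemma Rabs_le_inv (a b : R) : Rabs a <= b -> - b <= a <= b.
Proof.
  intros H. pose proof (Rle_abs a). pose proof (Rle_abs (- a)). rewrite Rabs_Ropp in *. lra.
Qed.

Lemma small_mult_lt (r c t : R) : 0 < r -> 0 <= c -> t <= r / (c + 1) -> t * c < r.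
Proof.
  intros Hr Hc Ht.
  assert (E : r / (c + 1) * c < r).
  { apply Rmult_lt_reg_l with (c + 1); [lra|].
    replace ((c + 1) * (r / (c + 1) * c)) with (r * c) by (field; lra). nra. }
  destruct (Rle_lt_dec t 0); nra.
Qed.

Section Norms.
Context {X : Banach}.
Implicit Types x y z : X.

Lemma vnorm_zero : vnorm (@vzero X) = 0.
Proof. now apply vnorm_eq0. Qed.

Lemma vnorm_opp x : vnorm (vopp x) = vnorm x.
Proof. rewrite vopp_vscal, vnorm_scal, Rabs_left by lra. ring. Qed.

Lemma vnorm_sub_sym x y : vnorm (vsub x y) = vnorm (vsub y x).
Proof. replace (vsub x y) with (vopp (vsub y x)) by vring. apply vnorm_opp. Qed.

Lemma vnorm_sub_triangle x y z : vnorm (vsub x z) <= vnorm (vsub x y) + vnorm (vsub y z).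
Proof. replace (vsub x z) with (vadd (vsub x y) (vsub y z)) by vring. apply vnorm_triangle. Qed.

Lemma vnorm_sub_eq0 x y : vnorm (vsub x y) = 0 -> x = y.
Proof.
  intro H. apply vnorm_eq0 in H.
  replace x with (vadd (vsub x y) y) by vring. now rewrite H, vadd_0l.
Qed.

Lemma vnorm_sub_diag x : vnorm (vsub x x) = 0.
Proof. replace (vsub x x) with (@vzero X) by vring. apply vnorm_zero. Qed.

Lemma vnorm_convex_comb x y t :
  0 <= t <= 1 -> vnorm (vadd (vscal t x) (vscal (1 - t) y)) <= t * vnorm x + (1 - t) * vnorm y.
Proof.
  intros Ht. eapply Rle_trans; [apply vnorm_triangle|].
  rewrite !vnorm_scal, !Rabs_right by lra. lra.
Qed.

End Norms.

Definition is_linear {X : Banach} (phi : X -> R) : Prop :=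
  (forall x y, phi (vadd x y) = phi x + phi y) /\ (forall a x, phi (vscal a x) = a * phi x).

Section LinearFunctionals.
Context {X : Banach} (phi : X -> R) (Lphi : is_linear phi).

Lemma linearD x y : phi (vadd x y) = phi x + phi y.
Proof. apply (proj1 Lphi). Qed.

Lemma linearZ a x : phi (vscal a x) = a * phi x.
Proof. apply (proj2 Lphi). Qed.

Lemma linear0 : phi vzero = 0.
Proof. rewrite <- (vscal_0l (@vzero X)), linearZ. ring. Qed.

Lemma linearN x : phi (vopp x) = - phi x.
Proof. rewrite vopp_vscal, linearZ. ring. Qed.

Lemma linear_abs_le c : (forall x, phi x <= c * vnorm x) -> forall x, Rabs (phi x) <= c * vnorm x.
Proof.
  intros H x. apply Rabs_le. split; [|apply H].
  pose proof (H (vopp x)). rewrite linearN, vnorm_opp in H0. lra.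
Qed.

End LinearFunctionals.

(** * Extended reals and infima *)

Lemma ele_refl a : ele a a.
Proof. destruct a; simpl; [lra|trivial]. Qed.

Lemma ele_trans a b c : ele a b -> ele b c -> ele a c.
Proof. destruct a, b, c; simpl; try tauto; lra. Qed.

Lemma ele_antisym a b : ele a b -> ele b a -> a = b.
Proof. destruct a, b; simpl; try tauto. intros; f_equal; lra. Qed.

Definition nonneg_set (E : ER -> Prop) : Prop := forall y, E y -> ele (Fin 0) y.

Lemma einf_exists (E : ER -> Prop) : nonneg_set E -> exists m, is_einf E m.
Proof.
  intros H0. destruct (classic (exists r, E (Fin r))) as [[r0 Hr0]|HN].
  - set (F := fun x => E (Fin (- x))).
    assert (Hb : bound F).
    { exists 0. intros x Hx. specialize (H0 _ Hx). simpl in H0. lra. }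
    assert (He : exists x, F x) by (exists (- r0); unfold F; now rewrite Ropp_involutive).
    destruct (completeness F Hb He) as [l [Hl1 Hl2]].
    exists (Fin (- l)). split.
    + intros [r|] Hy; simpl; [|trivial].
      assert (F (- r)) by (unfold F; now rewrite Ropp_involutive).
      specialize (Hl1 _ H). lra.
    + intros [c|] Hm'; simpl.
      * enough (l <= - c) by lra. apply Hl2.
        intros x Hx. specialize (Hm' _ Hx). simpl in Hm'. lra.
      * exact (Hm' _ Hr0).
  - exists PInf. split.
    + intros [r|] Hy; simpl; trivial. apply HN. eauto.
    + intros [|]; simpl; trivial.
Qed.

Lemma einf_spec (E : ER -> Prop) : nonneg_set E -> is_einf E (einf E).
Proof.
  intros H0. unfold einf. destruct (excluded_middle_informative _) as [h|h].
  - exact (proj2_sig (constructive_indefinite_description _ h)).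
  - exfalso. now apply h, einf_exists.
Qed.

Lemma einf_le (E : ER -> Prop) y : nonneg_set E -> E y -> ele (einf E) y.
Proof. intros H0 Hy. exact (proj1 (einf_spec E H0) y Hy). Qed.

Lemma einf_ge (E : ER -> Prop) m :
  nonneg_set E -> (forall y, E y -> ele m y) -> ele m (einf E).
Proof. intros H0 Hm. exact (proj2 (einf_spec E H0) m Hm). Qed.

Lemma einf_ge0 (E : ER -> Prop) : nonneg_set E -> ele (Fin 0) (einf E).
Proof. intros H0. now apply einf_ge. Qed.

(** * Dual space *)

Section DualNorm.
Context {X : Banach}.
Implicit Types phi psi : X -> R.

Lemma dual_linear phi : is_dual phi -> is_linear phi.
Proof. intros [H1 [H2 _]]. split; assumption. Qed.

Lemma dual_bound phi : is_dual phi -> exists c, 0 <= c /\ forall x, Rabs (phi x) <= c * vnorm x.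
Proof.
  intros [_ [_ [c Hc]]]. exists (Rmax c 0). split; [apply Rmax_r|].
  intros x. eapply Rle_trans; [apply Hc|].
  apply Rmult_le_compat_r; [apply vnorm_nonneg|apply Rmax_l].
Qed.

Lemma is_dual_of_bound phi c :
  is_linear phi -> (forall x, Rabs (phi x) <= c * vnorm x) -> is_dual phi.
Proof. intros [H1 H2] H3. repeat split; eauto. Qed.

Lemma dnorm_spec phi : is_dual phi ->
  exists c, dnorm phi = Fin c /\ 0 <= c /\ (forall x, Rabs (phi x) <= c * vnorm x) /\
    (forall c', 0 <= c' -> (forall x, Rabs (phi x) <= c' * vnorm x) -> c <= c').
Proof.
  intros D. pose proof (dual_linear phi D) as L.
  set (E := fun y => exists c, y = Fin c /\ 0 <= c /\ forall x, Rabs (phi x) <= c * vnorm x).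
  assert (H0 : nonneg_set E) by (intros y [c [-> [Hc _]]]; exact Hc).
  destruct (einf_spec E H0) as [S1 S2].
  destruct (dual_bound phi D) as [c0 [Hc0 Hb0]].
  unfold dnorm. fold E. destruct (einf E) as [c|] eqn:HE.
  2: { exact (False_ind _ (S1 (Fin c0) (ex_intro _ c0 (conj eq_refl (conj Hc0 Hb0))))). }
  assert (Hc : 0 <= c) by exact (S2 (Fin 0) H0).
  exists c. split; [reflexivity|]. split; [exact Hc|]. split.
  - intros x. destruct (Req_dec (vnorm x) 0) as [Hn|Hn].
    + apply vnorm_eq0 in Hn. subst x. rewrite linear0, Rabs_R0 by exact L.
      pose proof (vnorm_nonneg (@vzero X)). nra.
    + assert (Hp : 0 < vnorm x) by (pose proof (vnorm_nonneg x); lra).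
      assert (Hlb : ele (Fin (Rabs (phi x) / vnorm x)) (Fin c)).
      { apply S2. intros y [c' [-> [_ Hb]]]. simpl. specialize (Hb x).
        apply Rmult_le_reg_r with (vnorm x); [exact Hp|].
        unfold Rdiv. rewrite Rmult_assoc, Rinv_l by lra. lra. }
      simpl in Hlb. apply Rmult_le_compat_r with (r := vnorm x) in Hlb; [|lra].
      unfold Rdiv in Hlb. rewrite Rmult_assoc, Rinv_l in Hlb by lra. lra.
  - intros c' Hc' Hb. exact (S1 (Fin c') (ex_intro _ c' (conj eq_refl (conj Hc' Hb)))).
Qed.

Lemma dnorm_le phi c' : is_dual phi -> 0 <= c' -> (forall x, Rabs (phi x) <= c' * vnorm x) ->
  exists c, dnorm phi = Fin c /\ c <= c'.
Proof.
  intros D H0 H. destruct (dnorm_spec phi D) as [c [E [_ [_ M]]]]. eauto.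
Qed.

Lemma dnorm_lt phi c' r : is_dual phi -> 0 <= c' -> c' < r ->
  (forall x, Rabs (phi x) <= c' * vnorm x) -> elt (dnorm phi) (Fin r).
Proof.
  intros D H0 H1 H. destruct (dnorm_le phi c' D H0 H) as [c [-> Hc]]. simpl. lra.
Qed.

Lemma dnorm_ge0 phi : is_dual phi -> ele (Fin 0) (dnorm phi).
Proof. intros D. destruct (dnorm_spec phi D) as [c [-> [H _]]]. exact H. Qed.

Lemma dzero_dual : is_dual (@dzero X).
Proof.
  apply is_dual_of_bound with 0.
  - split; intros; unfold dzero; ring.
  - intros; unfold dzero. rewrite Rabs_R0. lra.
Qed.

Lemma dsub_dual phi psi : is_dual phi -> is_dual psi -> is_dual (dsub phi psi).
Proof.
  intros D1 D2. pose proof (dual_linear _ D1) as L1. pose proof (dual_linear _ D2) as L2.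
  destruct (dual_bound _ D1) as [c1 [_ H1]], (dual_bound _ D2) as [c2 [_ H2]].
  apply is_dual_of_bound with (c1 + c2).
  - split; intros; unfold dsub; rewrite ?(linearD phi), ?(linearD psi), ?(linearZ phi),
      ?(linearZ psi) by assumption; ring.
  - intros x. unfold dsub, Rminus. eapply Rle_trans; [apply Rabs_triang|].
    rewrite Rabs_Ropp. specialize (H1 x). specialize (H2 x). lra.
Qed.

Definition dscal (r : R) (psi : X -> R) : X -> R := fun v => r * psi v.

Lemma dscal_dual r psi : is_dual psi -> is_dual (dscal r psi).
Proof.
  intros D. pose proof (dual_linear _ D) as L. destruct (dual_bound _ D) as [c [_ H]].
  apply is_dual_of_bound with (Rabs r * c).
  - split; intros; unfold dscal; rewrite ?(linearD psi), ?(linearZ psi) by assumption; ring.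
  - intros x. unfold dscal. rewrite Rabs_mult, Rmult_assoc.
    apply Rmult_le_compat_l; [apply Rabs_pos|apply H].
Qed.

Lemma ddist0_le (A : (X -> R) -> Prop) phi :
  (forall psi, A psi -> is_dual psi) -> A phi -> ele (ddist0 A) (dnorm phi).
Proof.
  intros HA Hphi. apply einf_le; [|eauto].
  intros y [psi [Hpsi ->]]. apply dnorm_ge0. auto.
Qed.

Lemma ddist0_ge0 (A : (X -> R) -> Prop) :
  (forall psi, A psi -> is_dual psi) -> ele (Fin 0) (ddist0 A).
Proof. intros HA. apply einf_ge0. intros y [psi [Hpsi ->]]. apply dnorm_ge0. auto. Qed.

Lemma subdiff_dual (f : X -> ER) x psi : subdiff f x psi -> is_dual psi.
Proof. intros [D _]. exact D. Qed.

Lemma dboundary_dual (A : (X -> R) -> Prop) psi : dboundary A psi -> is_dual psi.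
Proof. intros [[D _] _]. exact D. Qed.

End DualNorm.

(** * Hahn--Banach theorem *)

Lemma zorn_preorder (T : Type) (t0 : T) (le : T -> T -> Prop) :
  (forall t, le t t) -> (forall r s t, le r s -> le s t -> le r t) ->
  (forall C : T -> Prop, (forall s t, C s -> C t -> le s t \/ le t s) ->
     exists t, forall s, C s -> le s t) ->
  exists t, forall s, le t s -> le s t.
Proof.
  intros Hr Ht Hc.
  destruct (@classical_sets.ZL_preorder T t0 (fun a b => boolp.asbool (le a b))) as [t Htm].
  - intros t. apply boolp.asboolT, Hr.
  - intros r s t H1 H2. apply boolp.asboolT. apply boolp.asboolW in H1, H2. eauto.
  - intros C HC. destruct (Hc C) as [t Ht'].
    + intros s t Cs Ct. destruct (HC s t Cs Ct); [left|right]; now apply boolp.asboolW.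
    + exists t. intros s Cs. now apply boolp.asboolT, Ht'.
  - exists t. intros s Hs. apply boolp.asboolW, Htm. now apply boolp.asboolT.
Qed.

Lemma Rdiv_le_cross (a b s t : R) : 0 < s -> 0 < t -> t * a <= s * b -> a / s <= b / t.
Proof.
  intros Hs Ht H. apply Rmult_le_reg_l with (s * t); [nra|].
  replace (s * t * (a / s)) with (t * a) by (field; lra).
  replace (s * t * (b / t)) with (s * b) by (field; lra). exact H.
Qed.

Definition subspace {X : Banach} (D : X -> Prop) : Prop :=
  D vzero /\ (forall v w, D v -> D w -> D (vadd v w)) /\ (forall r v, D v -> D (vscal r v)).

Lemma subspace_line_unique {X : Banach} (D : X -> Prop) e m1 m2 t1 t2 :
  subspace D -> ~ D e -> D m1 -> D m2 ->
  vadd m1 (vscal t1 e) = vadd m2 (vscal t2 e) -> t1 = t2 /\ m1 = m2.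
Proof.
  intros [_ [Dadd Dscal]] He Hm1 Hm2 H.
  assert (E : vsub m1 m2 = vscal (t2 - t1) e).
  { transitivity (vadd (vsub (vadd m1 (vscal t1 e)) m2) (vscal (- t1) e)); [vring|].
    rewrite H. vring. }
  destruct (Req_dec t1 t2) as [<-|Ht].
  - split; [reflexivity|]. replace (t1 - t1) with 0 in E by ring. rewrite vscal_0l in E.
    replace m1 with (vadd (vsub m1 m2) m2) by vring. now rewrite E, vadd_0l.
  - exfalso. apply He. replace e with (vscal (/ (t2 - t1)) (vsub m1 m2)).
    + apply Dscal, Dadd; [exact Hm1|]. rewrite vopp_vscal. now apply Dscal.
    + rewrite E, vscal_assoc, Rinv_l by lra. apply vscal_one.
Qed.

(** A linear functional below the convex function [m |-> inf_(a in Dom) Phi m a]; the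
    extra parameter [a] is what lets the sum rule below follow from the same statement. *)
Section HahnBanach.
Context {X : Banach} {A : Type} (Dom : A -> Prop) (cmb : R -> A -> A -> A)
  (Phi : X -> A -> R) (a0 : A).
Hypothesis Dom_a0 : Dom a0.
Hypothesis Dom_cmb : forall l a1 a2, 0 <= l <= 1 -> Dom a1 -> Dom a2 -> Dom (cmb l a1 a2).
Hypothesis Phi_convex : forall l m1 m2 a1 a2, 0 <= l <= 1 -> Dom a1 -> Dom a2 ->
  Phi (vadd (vscal l m1) (vscal (1 - l) m2)) (cmb l a1 a2) <= l * Phi m1 a1 + (1 - l) * Phi m2 a2.
Hypothesis Phi_zero : forall a, Dom a -> 0 <= Phi vzero a.

Definition minorant_on (D : X -> Prop) (z : X -> R) : Prop :=
  subspace D /\ (forall v w, D v -> D w -> z (vadd v w) = z v + z w) /\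
  (forall r v, D v -> z (vscal r v) = r * z v) /\
  (forall m a, D m -> Dom a -> z m <= Phi m a).

Definition extends (D : X -> Prop) (z : X -> R) (D' : X -> Prop) (z' : X -> R) : Prop :=
  (forall v, D v -> D' v) /\ (forall v, D v -> z v = z' v).

Section OneStep.
Variables (D : X -> Prop) (z : X -> R) (e : X).
Hypothesis Hmin : minorant_on D z.
Hypothesis He : ~ D e.

Lemma hb_slope_sep m1 m2 s t a1 a2 : D m1 -> D m2 -> 0 < s -> 0 < t -> Dom a1 -> Dom a2 ->
  t * (z m1 - Phi (vadd m1 (vscal (- s) e)) a1) <= s * (Phi (vadd m2 (vscal t e)) a2 - z m2).
Proof.
  destruct Hmin as [[_ [Dadd Dscal]] [zadd [zscal zle]]].
  intros Hm1 Hm2 Hs Ht Ha1 Ha2.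
  set (l := t / (s + t)).
  assert (Hl : 0 <= l <= 1).
  { unfold l. split; [apply Rlt_le, Rdiv_lt_0_compat; lra|].
    apply Rmult_le_reg_r with (s + t); [lra|]. field_simplify; lra. }
  pose proof (Phi_convex l (vadd m1 (vscal (- s) e)) (vadd m2 (vscal t e)) a1 a2 Hl Ha1 Ha2) as C.
  replace (vadd (vscal l (vadd m1 (vscal (- s) e))) (vscal (1 - l) (vadd m2 (vscal t e))))
    with (vadd (vscal l m1) (vscal (1 - l) m2)) in C by (vring; unfold l; field; lra).
  pose proof (zle _ _ (Dadd _ _ (Dscal l m1 Hm1) (Dscal (1 - l) m2 Hm2))
                (Dom_cmb l a1 a2 Hl Ha1 Ha2)) as C2.
  rewrite zadd, !zscal in C2 by auto.
  assert (E : l * z m1 + (1 - l) * z m2 <=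
              l * Phi (vadd m1 (vscal (- s) e)) a1 + (1 - l) * Phi (vadd m2 (vscal t e)) a2) by lra.
  apply Rmult_le_compat_l with (r := s + t) in E; [|lra].
  unfold l in E. field_simplify in E; [|lra..]. lra.
Qed.

Lemma hb_slope_exists : exists c,
  (forall m s a, D m -> 0 < s -> Dom a -> z m - Phi (vadd m (vscal (- s) e)) a <= s * c) /\
  (forall m t a, D m -> 0 < t -> Dom a -> t * c <= Phi (vadd m (vscal t e)) a - z m).
Proof.
  pose proof Hmin as [[D0 _] _].
  set (S := fun r => exists m s a, D m /\ 0 < s /\ Dom a /\
                       r = (z m - Phi (vadd m (vscal (- s) e)) a) / s).
  assert (sep : forall m1 m2 s t a1 a2, D m1 -> D m2 -> 0 < s -> 0 < t -> Dom a1 -> Dom a2 ->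
    (z m1 - Phi (vadd m1 (vscal (- s) e)) a1) / s <= (Phi (vadd m2 (vscal t e)) a2 - z m2) / t).
  { intros. apply Rdiv_le_cross; auto. apply hb_slope_sep; auto. }
  assert (Sb : bound S).
  { exists ((Phi (vadd vzero (vscal 1 e)) a0 - z vzero) / 1).
    intros r [m [s [a [Hm [Hs [Ha ->]]]]]]. apply sep; auto; lra. }
  assert (Sne : exists r, S r) by (exists ((z vzero - Phi (vadd vzero (vscal (- 1) e)) a0) / 1);
                                   exists vzero, 1, a0; repeat split; auto; lra).
  destruct (completeness S Sb Sne) as [c [Hc1 Hc2]].
  exists c. split.
  - intros m s a Hm Hs Ha.
    assert (H : (z m - Phi (vadd m (vscal (- s) e)) a) / s <= c)
      by (apply Hc1; exists m, s, a; auto).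
    apply Rmult_le_compat_l with (r := s) in H; [|lra].
    replace (s * ((z m - Phi (vadd m (vscal (- s) e)) a) / s))
      with (z m - Phi (vadd m (vscal (- s) e)) a) in H by (field; lra). exact H.
  - intros m t a Hm Ht Ha.
    assert (H : c <= (Phi (vadd m (vscal t e)) a - z m) / t).
    { apply Hc2. intros r [m1 [s [a1 [Hm1 [Hs [Ha1 ->]]]]]]. apply sep; auto. }
    apply Rmult_le_compat_l with (r := t) in H; [|lra].
    replace (t * ((Phi (vadd m (vscal t e)) a - z m) / t))
      with (Phi (vadd m (vscal t e)) a - z m) in H by (field; lra). exact H.
Qed.

Lemma hb_step : exists D' z', minorant_on D' z' /\ extends D z D' z' /\ D' e.
Proof.
  pose proof Hmin as [HD [zadd [zscal zle]]]. pose proof HD as [D0 [Dadd Dscal]].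
  destruct hb_slope_exists as [c [c_lo c_hi]].
  set (D' := fun v => exists m t, D m /\ v = vadd m (vscal t e)).
  set (z' := fun v =>
    match excluded_middle_informative
            (exists mt : X * R, D (fst mt) /\ v = vadd (fst mt) (vscal (snd mt) e)) with
    | left h => let mt := proj1_sig (constructive_indefinite_description _ h) in
                z (fst mt) + snd mt * c
    | right _ => 0
    end).
  assert (z'_eq : forall m t, D m -> z' (vadd m (vscal t e)) = z m + t * c).
  { intros m t Hm. unfold z'. destruct (excluded_middle_informative _) as [h|h].
    - destruct (constructive_indefinite_description _ h) as [[m1 t1] [Hm1 E]]. simpl in *.
      now destruct (subspace_line_unique D e m m1 t t1 HD He Hm Hm1 E) as [-> ->].
    - exfalso. apply h. exists (m, t). auto. }
  exists D', z'. split; [|split].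
  - split; [split; [|split]|split; [|split]].
    + exists vzero, 0. split; auto. vring.
    + intros v w [m1 [t1 [Hm1 ->]]] [m2 [t2 [Hm2 ->]]].
      exists (vadd m1 m2), (t1 + t2). split; auto. vring.
    + intros r v [m1 [t1 [Hm1 ->]]]. exists (vscal r m1), (r * t1). split; auto. vring.
    + intros v w [m1 [t1 [Hm1 ->]]] [m2 [t2 [Hm2 ->]]].
      replace (vadd (vadd m1 (vscal t1 e)) (vadd m2 (vscal t2 e)))
        with (vadd (vadd m1 m2) (vscal (t1 + t2) e)) by vring.
      rewrite !z'_eq, zadd by auto. ring.
    + intros r v [m1 [t1 [Hm1 ->]]].
      replace (vscal r (vadd m1 (vscal t1 e))) with (vadd (vscal r m1) (vscal (r * t1) e)) by vring.
      rewrite !z'_eq, zscal by auto. ring.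
    + intros v a [m [t [Hm ->]]] Ha. rewrite z'_eq by exact Hm.
      destruct (Rtotal_order t 0) as [Hn|[->|Hp]].
      * pose proof (c_lo m (- t) a Hm ltac:(lra) Ha). rewrite Ropp_involutive in H. lra.
      * replace (vadd m (vscal 0 e)) with m by vring. rewrite Rmult_0_l, Rplus_0_r. auto.
      * pose proof (c_hi m t a Hm Hp Ha). lra.
  - split.
    + intros v Hv. exists v, 0. split; auto. vring.
    + intros v Hv. replace v with (vadd v (vscal 0 e)) at 2 by vring.
      rewrite z'_eq by exact Hv. ring.
  - exists vzero, 1. split; auto. vring.
Qed.

End OneStep.

Definition hb_partial := {p : (X -> Prop) * (X -> R) | minorant_on (fst p) (snd p)}.

Definition hb_le (p q : hb_partial) : Prop :=
  extends (fst (proj1_sig p)) (snd (proj1_sig p)) (fst (proj1_sig q)) (snd (proj1_sig q)).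

Lemma hb_chain_ub (Ch : hb_partial -> Prop) (p0 : hb_partial) :
  Ch p0 -> (forall p q, Ch p -> Ch q -> hb_le p q \/ hb_le q p) ->
  exists t, forall p, Ch p -> hb_le p t.
Proof.
  intros Hp0 HCh.
  set (DU := fun v => exists p : hb_partial, Ch p /\ fst (proj1_sig p) v).
  set (zU := fun v => match excluded_middle_informative (DU v) with
      | left h => snd (proj1_sig (proj1_sig (constructive_indefinite_description _ h))) v
      | right _ => 0 end).
  assert (zU_eq : forall p v, Ch p -> fst (proj1_sig p) v -> zU v = snd (proj1_sig p) v).
  { intros p v Hp Hv. unfold zU. destruct (excluded_middle_informative _) as [h|h].
    - destruct (constructive_indefinite_description _ h) as [q [Hq Hqv]]. simpl.
      destruct (HCh p q Hp Hq) as [[_ E]|[_ E]]; [symmetry|]; auto.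
    - exfalso. apply h. exists p. auto. }
  assert (common : forall p q v w, Ch p -> Ch q -> fst (proj1_sig p) v -> fst (proj1_sig q) w ->
     exists r, Ch r /\ fst (proj1_sig r) v /\ fst (proj1_sig r) w).
  { intros p q v w Hp Hq Hv Hw.
    destruct (HCh p q Hp Hq) as [[E _]|[E _]]; [exists q|exists p]; auto. }
  assert (vU : minorant_on DU zU).
  { split; [split; [|split]|split; [|split]].
    - exists p0. split; [exact Hp0|]. apply (proj2_sig p0).
    - intros v w [p [Hp Hv]] [q [Hq Hw]].
      destruct (common p q v w Hp Hq Hv Hw) as [r [Hr [Hrv Hrw]]].
      exists r. split; [exact Hr|]. apply (proj2_sig r); auto.
    - intros r0 v [p [Hp Hv]]. exists p. split; [exact Hp|]. apply (proj2_sig p); auto.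
    - intros v w [p [Hp Hv]] [q [Hq Hw]].
      destruct (common p q v w Hp Hq Hv Hw) as [r [Hr [Hrv Hrw]]].
      destruct (proj2_sig r) as [[_ [S1 _]] [Z1 _]]. rewrite !(zU_eq r) by auto. auto.
    - intros r0 v [p [Hp Hv]]. destruct (proj2_sig p) as [[_ [_ S2]] [_ [Z2 _]]].
      rewrite !(zU_eq p) by auto. auto.
    - intros m a [p [Hp Hm]] Ha. destruct (proj2_sig p) as [_ [_ [_ Z3]]].
      rewrite (zU_eq p) by auto. auto. }
  exists (exist _ (DU, zU) vU). intros s Hs. split; simpl.
  - intros v Hv. exists s. auto.
  - intros v Hv. symmetry. apply zU_eq; auto.
Qed.

Theorem hahn_banach : exists z : X -> R, is_linear z /\ forall m a, Dom a -> z m <= Phi m a.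
Proof.
  assert (v0 : minorant_on (fun v => v = vzero) (fun _ => 0)).
  { split; [split; [|split]|split; [|split]].
    - reflexivity.
    - intros v w -> ->. apply vadd_zero.
    - intros r v ->. apply vscal_0r.
    - intros; ring.
    - intros; ring.
    - intros m a -> Ha. auto. }
  set (t0 := exist _ (_, _) v0 : hb_partial).
  destruct (zorn_preorder hb_partial t0 hb_le) as [[[D z] Hv] Hmax].
  - intros p. split; auto.
  - intros p q r [H1 H2] [H3 H4]. split; intros v Hv; [auto|]. rewrite H2 by auto. auto.
  - intros Ch HCh. destruct (classic (exists p, Ch p)) as [[p0 Hp0]|HN].
    + exact (hb_chain_ub Ch p0 Hp0 HCh).
    + exists t0. intros s Hs. exfalso. eauto.
  - simpl in Hv.
    assert (full : forall v, D v).
    { intros e. apply NNPP. intro He.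
      destruct (hb_step D z e Hv He) as [D' [z' [Hv' [Hle He']]]].
      destruct (Hmax (exist _ (D', z') Hv') Hle) as [Hle' _]. exact (He (Hle' e He')). }
    pose proof Hv as [_ [zadd [zscal zle]]].
    exists z. split; [split|]; auto.
Qed.

End HahnBanach.

(** Real part of an extended real, with the junk value [0] at [+oo]. *)
Definition fin_part (a : ER) : R := match a with Fin r => r | PInf => 0 end.

Section HahnBanachApplications.
Context {X : Banach}.

Lemma norming_functional (e : X) :
  exists psi, is_dual psi /\ (forall w, Rabs (psi w) <= vnorm w) /\ psi e = vnorm e.
Proof.
  destruct (hahn_banach (X := X) (fun _ : R => True) (fun l a b => l * a + (1 - l) * b)
     (fun m t => vnorm (vadd m (vscal t e)) - t * vnorm e) 0) as [z [Lz Hz]]; auto.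
  - intros l m1 m2 a1 a2 Hl _ _.
    replace (vadd (vadd (vscal l m1) (vscal (1 - l) m2)) (vscal (l * a1 + (1 - l) * a2) e))
      with (vadd (vscal l (vadd m1 (vscal a1 e))) (vscal (1 - l) (vadd m2 (vscal a2 e)))) by vring.
    pose proof (vnorm_convex_comb (vadd m1 (vscal a1 e)) (vadd m2 (vscal a2 e)) l Hl). lra.
  - intros a _. rewrite vadd_0l, vnorm_scal.
    pose proof (Rle_abs a). pose proof (vnorm_nonneg e). nra.
  - assert (Hle : forall w, z w <= 1 * vnorm w).
    { intros w. specialize (Hz w 0 I). replace (vadd w (vscal 0 e)) with w in Hz by vring. lra. }
    pose proof (linear_abs_le z Lz 1 Hle) as Hb.
    exists z. split; [|split].
    + now apply is_dual_of_bound with 1.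
    + intros w. specialize (Hb w). lra.
    + apply Rle_antisym; [specialize (Hle e); lra|].
      specialize (Hz (vopp e) 1 I).
      replace (vadd (vopp e) (vscal 1 e)) with (@vzero X) in Hz by vring.
      rewrite vnorm_zero, linearN in Hz by exact Lz. lra.
Qed.

Lemma sum_rule_minorant (F : X -> ER) (P : X -> R) (u : X) (Fu : R) (phi : X -> R) :
  convexE F -> convexR P -> F u = Fin Fu -> is_dual phi ->
  (forall w Fw, F w = Fin Fw -> phi (vsub w u) <= Fw + P w - Fu - P u) ->
  exists z, is_linear z /\ forall m w Fw, F (vadd u w) = Fin Fw ->
    z m <= P (vadd u (vadd m w)) - P u + Fw - Fu - phi w.
Proof.
  intros CF CP HFu Dphi Hsub. pose proof (dual_linear _ Dphi) as Lphi.
  assert (comb : forall l a1 a2, vadd (vscal l (vadd u a1)) (vscal (1 - l) (vadd u a2)) =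
                                 vadd u (vadd (vscal l a1) (vscal (1 - l) a2))) by (intros; vring).
  destruct (hahn_banach (X := X) (fun w => exists Fw, F (vadd u w) = Fin Fw)
     (fun l a b => vadd (vscal l a) (vscal (1 - l) b))
     (fun m w => P (vadd u (vadd m w)) - P u + fin_part (F (vadd u w)) - Fu - phi w) vzero)
     as [z [Lz Hz]].
  - exists Fu. now rewrite vadd_zero.
  - intros l a1 a2 Hl [F1 H1] [F2 H2].
    pose proof (CF _ _ _ _ l H1 H2 Hl) as C. rewrite comb in C.
    destruct (F (vadd u (vadd (vscal l a1) (vscal (1 - l) a2)))); [eauto|contradiction].
  - intros l m1 m2 a1 a2 Hl [F1 H1] [F2 H2].
    pose proof (CF _ _ _ _ l H1 H2 Hl) as C. rewrite comb in C.
    pose proof (CP (vadd u (vadd m1 a1)) (vadd u (vadd m2 a2)) l Hl) as C2.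
    replace (vadd (vscal l (vadd u (vadd m1 a1))) (vscal (1 - l) (vadd u (vadd m2 a2))))
      with (vadd u (vadd (vadd (vscal l m1) (vscal (1 - l) m2))
                         (vadd (vscal l a1) (vscal (1 - l) a2)))) in C2 by vring.
    rewrite H1, H2. simpl.
    destruct (F (vadd u (vadd (vscal l a1) (vscal (1 - l) a2)))) as [r|]; [|contradiction].
    simpl in C |- *. rewrite (linearD phi), !(linearZ phi) by exact Lphi. nra.
  - intros a [Fa Ha]. rewrite Ha. simpl.
    pose proof (Hsub _ _ Ha) as H. replace (vsub (vadd u a) u) with a in H by vring.
    rewrite vadd_0l. lra.
  - exists z. split; [exact Lz|]. intros m w Fw HFw.
    specialize (Hz m w (ex_intro _ Fw HFw)). rewrite HFw in Hz. exact Hz.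
Qed.

(** Sum rule [d(F + P)(u) <= dF(u) + L B*] for an [L]-Lipschitz convex [P]. *)
Lemma subdiff_sum_lipschitz (F : X -> ER) (P : X -> R) (L : R) (u : X) (Fu : R) (phi : X -> R) :
  convexE F -> convexR P -> (forall v w, P v - P w <= L * vnorm (vsub v w)) ->
  F u = Fin Fu -> is_dual phi ->
  (forall w Fw, F w = Fin Fw -> phi (vsub w u) <= Fw + P w - Fu - P u) ->
  exists z, is_dual z /\ (forall v, Rabs (z v) <= L * vnorm v) /\ subdiff F u (dsub phi z).
Proof.
  intros CF CP LP HFu Dphi Hsub.
  destruct (sum_rule_minorant F P u Fu phi CF CP HFu Dphi Hsub) as [z [Lz Hz]].
  assert (Hle : forall m, z m <= L * vnorm m).
  { intros m. assert (H0 : F (vadd u vzero) = Fin Fu) by now rewrite vadd_zero.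
    specialize (Hz m vzero Fu H0).
    rewrite !vadd_zero, (linear0 phi (dual_linear _ Dphi)) in Hz.
    specialize (LP (vadd u m) u). replace (vsub (vadd u m) u) with m in LP by vring. lra. }
  pose proof (linear_abs_le z Lz L Hle) as Hb.
  assert (Dz : is_dual z) by (apply is_dual_of_bound with L; assumption).
  exists z. split; [exact Dz|]. split; [exact Hb|]. split; [now apply dsub_dual|].
  exists Fu. split; [exact HFu|]. intros w.
  destruct (F w) as [Fw|] eqn:HFw; [|trivial].
  set (a := vsub w u).
  assert (Ea : vadd u a = w) by (unfold a; vring).
  specialize (Hz (vopp a) a Fw ltac:(now rewrite Ea)).
  replace (vadd u (vadd (vopp a) a)) with u in Hz by vring.
  rewrite linearN in Hz by exact Lz. unfold dsub. fold a. lra.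
Qed.

End HahnBanachApplications.

(** * Ekeland's variational principle *)

Lemma pow_half_lt (y : R) : 0 < y -> exists N, (/ 2) ^ N < y.
Proof.
  intros Hy. destruct (pow_lt_1_zero (/ 2) ltac:(rewrite Rabs_right; lra) y Hy) as [N HN].
  exists N. specialize (HN N (le_n N)). rewrite Rabs_right in HN; [exact HN|].
  apply Rle_ge, pow_le. lra.
Qed.

Lemma le_pow_half_0 (a : R) : (forall n, a <= (/ 2) ^ n) -> a <= 0.
Proof.
  intros H. apply Rnot_lt_le. intros Ha. destruct (pow_half_lt a Ha) as [N HN].
  specialize (H N). lra.
Qed.

Lemma elt_interpolate c0 a : elt (Fin c0) a -> exists c1, c0 < c1 /\ elt (Fin c1) a.
Proof.
  destruct a as [r|]; simpl; intros H.
  - exists ((c0 + r) / 2). split; lra.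
  - exists (c0 + 1). split; [lra|exact I].
Qed.

Lemma dependent_choice_seq {T : Type} (P : T -> Prop) (Rel : nat -> T -> T -> Prop) (x0 : T) :
  P x0 -> (forall n y, P y -> exists v, P v /\ Rel n y v) ->
  exists xs : nat -> T, xs O = x0 /\ forall n, P (xs n) /\ Rel n (xs n) (xs (S n)).
Proof.
  intros H0 Hstep.
  set (next := fun y n => match excluded_middle_informative (exists v, P v /\ Rel n y v) with
                          | left h => proj1_sig (constructive_indefinite_description _ h)
                          | right _ => y end).
  set (xs := fix xs (n : nat) : T := match n with O => x0 | S n => next (xs n) n end).
  assert (Hnext : forall n y, P y -> P (next y n) /\ Rel n y (next y n)).
  { intros n y Hy. unfold next. destruct (excluded_middle_informative _) as [h|h].
    - exact (proj2_sig (constructive_indefinite_description _ h)).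
    - exfalso. exact (h (Hstep n y Hy)). }
  assert (HP : forall n, P (xs n)).
  { induction n as [|n IH]; [exact H0|]. exact (proj1 (Hnext n _ IH)). }
  exists xs. split; [reflexivity|]. intros n. split; [apply HP|]. exact (proj2 (Hnext n _ (HP n))).
Qed.

Section Ekeland.
Context {X : Banach} (G : X -> ER) (k : R).
Hypothesis k_pos : 0 < k.
Hypothesis G_nonneg : forall v, ele (Fin 0) (G v).
Hypothesis G_lsc : lscE G.

Definition ekeland_set (y v : X) : Prop :=
  exists gv, G v = Fin gv /\ gv + k * vnorm (vsub v y) <= fin_part (G y).

Lemma ekeland_set_refl y gy : G y = Fin gy -> ekeland_set y y.
Proof. intros Hy. exists gy. split; [exact Hy|]. rewrite vnorm_sub_diag, Hy. simpl. lra. Qed.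

Lemma ekeland_set_trans y w v : ekeland_set y w -> ekeland_set w v -> ekeland_set y v.
Proof.
  intros [gw [Gw Hw]] [gv [Gv Hv]]. rewrite Gw in Hv. simpl in Hv.
  exists gv. split; [exact Gv|]. pose proof (vnorm_sub_triangle v w y). nra.
Qed.

Definition ekeland_step (n : nat) (y v : X) : Prop :=
  ekeland_set y v /\
  forall w gw, ekeland_set y w -> G w = Fin gw -> fin_part (G v) <= gw + (/ 2) ^ n.

Lemma ekeland_step_exists n y gy : G y = Fin gy -> exists v, ekeland_step n y v.
Proof.
  intros Hy.
  set (F := fun x => exists w, ekeland_set y w /\ G w = Fin (- x)).
  assert (Fb : bound F).
  { exists 0. intros x [w [_ Hw]]. specialize (G_nonneg w). rewrite Hw in G_nonneg.
    simpl in G_nonneg. lra. }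
  assert (Fe : exists x, F x)
    by (exists (- gy), y; rewrite Ropp_involutive; split; [eapply ekeland_set_refl|]; eauto).
  destruct (completeness F Fb Fe) as [l [Hl1 Hl2]].
  pose proof (pow_lt (/ 2) n ltac:(lra)) as Hp.
  assert (Ex : exists x, F x /\ l - (/ 2) ^ n < x).
  { apply NNPP. intro HN. enough (l <= l - (/ 2) ^ n) by lra.
    apply Hl2. intros x Fx. apply Rnot_lt_le. intro. apply HN. eauto. }
  destruct Ex as [x [[w [Sw Gw]] Hx]].
  exists w. split; [exact Sw|]. intros w' gw' Sw' Gw'.
  assert (F (- gw')) by (exists w'; rewrite Ropp_involutive; auto).
  specialize (Hl1 _ H). rewrite Gw. simpl. lra.
Qed.

Section Sequence.
Variable xs : nat -> X.
Hypothesis xs_step : forall n, ekeland_step n (xs n) (xs (S n)).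

Lemma ekeland_chain n m : (exists g, G (xs n) = Fin g) -> ekeland_set (xs n) (xs (n + m)%nat).
Proof.
  intros [g Hg]. induction m as [|m IH].
  - rewrite Nat.add_0_r. eapply ekeland_set_refl; eauto.
  - replace (n + S m)%nat with (S (n + m)) by lia.
    eapply ekeland_set_trans; [exact IH|]. exact (proj1 (xs_step (n + m)%nat)).
Qed.

Lemma ekeland_diam n v : ekeland_set (xs (S n)) v -> k * vnorm (vsub v (xs (S n))) <= (/ 2) ^ n.
Proof.
  intros Sv. destruct (xs_step n) as [S1 Hg].
  assert (Sv' : ekeland_set (xs n) v) by (eapply ekeland_set_trans; eauto).
  destruct Sv as [gv [Gv Hv]]. specialize (Hg v gv Sv' Gv). lra.
Qed.

Lemma ekeland_finite n : exists g, G (xs (S n)) = Fin g.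
Proof. destruct (xs_step n) as [[g [Hg _]] _]. eauto. Qed.

Lemma ekeland_tail n m : (S n <= m)%nat -> k * vnorm (vsub (xs m) (xs (S n))) <= (/ 2) ^ n.
Proof.
  intros Hm. replace m with (S n + (m - S n))%nat by lia.
  apply ekeland_diam, ekeland_chain, ekeland_finite.
Qed.

Lemma ekeland_cauchy : forall e, 0 < e -> exists N, forall m n, (N <= m)%nat -> (N <= n)%nat ->
  vnorm (vadd (xs m) (vopp (xs n))) < e.
Proof.
  intros e He. destruct (pow_half_lt (e * k / 2)) as [N0 HN0]; [nra|].
  exists (S N0). intros m n Hm Hn.
  pose proof (ekeland_tail N0 m Hm). pose proof (ekeland_tail N0 n Hn).
  pose proof (vnorm_sub_triangle (xs m) (xs (S N0)) (xs n)) as T.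
  rewrite (vnorm_sub_sym (xs (S N0)) (xs n)) in T. unfold vsub in *. nra.
Qed.

Lemma ekeland_limit_mem z : (exists g, G (xs O) = Fin g) ->
  (forall e, 0 < e -> exists N, forall n, (N <= n)%nat -> vnorm (vadd (xs n) (vopp z)) < e) ->
  forall n, ekeland_set (xs n) z.
Proof.
  intros Hfin0 Hz n. apply NNPP. intros Hnot.
  assert (Hfin : exists g, G (xs n) = Fin g) by (destruct n; [exact Hfin0|apply ekeland_finite]).
  destruct Hfin as [gn Hgn].
  set (c0 := gn - k * vnorm (vsub z (xs n))).
  assert (Hc0 : elt (Fin c0) (G z)).
  { destruct (G z) as [gz|] eqn:Gz; simpl; [|exact I].
    apply Rnot_le_lt. intro Hle. apply Hnot. exists gz. split; [exact Gz|].
    rewrite Hgn. simpl. unfold c0 in Hle. lra. }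
  destruct (elt_interpolate _ _ Hc0) as [c1 [Hc01 Hc1]].
  destruct (G_lsc z c1 Hc1) as [d [Hd Hnb]].
  destruct (Hz (Rmin d ((c1 - c0) / k))) as [N HN].
  { apply Rmin_pos; [exact Hd|]. apply Rdiv_lt_0_compat; lra. }
  specialize (HN (n + N)%nat ltac:(lia)). fold (vsub (xs (n + N)%nat) z) in HN.
  assert (Hm1 : vnorm (vsub (xs (n + N)%nat) z) < d)
    by (pose proof (Rmin_l d ((c1 - c0) / k)); lra).
  assert (Hm2 : k * vnorm (vsub (xs (n + N)%nat) z) < c1 - c0).
  { pose proof (Rmin_r d ((c1 - c0) / k)).
    apply Rmult_lt_compat_l with (r := k) in HN; [|lra].
    apply Rlt_le_trans with (k * ((c1 - c0) / k)); [nra|]. right. field. lra. }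
  specialize (Hnb _ Hm1).
  destruct (ekeland_chain n N (ex_intro _ gn Hgn)) as [gm [Gm Hgm]].
  rewrite Gm in Hnb. rewrite Hgn in Hgm. simpl in Hnb, Hgm.
  pose proof (vnorm_sub_triangle z (xs (n + N)%nat) (xs n)) as T.
  rewrite (vnorm_sub_sym z (xs (n + N)%nat)) in T. unfold c0 in *. nra.
Qed.

Lemma ekeland_limit_unique v w :
  (forall n, ekeland_set (xs n) v) -> (forall n, ekeland_set (xs n) w) -> v = w.
Proof.
  intros Hv Hw. apply vnorm_sub_eq0.
  assert (H : k * vnorm (vsub v w) / 2 <= 0).
  { apply le_pow_half_0. intros n.
    pose proof (ekeland_diam n v (Hv (S n))). pose proof (ekeland_diam n w (Hw (S n))).
    pose proof (vnorm_sub_triangle v (xs (S n)) w) as T.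
    rewrite (vnorm_sub_sym (xs (S n)) w) in T. simpl. nra. }
  pose proof (vnorm_nonneg (vsub v w)).
  assert (k * vnorm (vsub v w) <= 0) by lra. nra.
Qed.

End Sequence.

Theorem ekeland x0 g0 : G x0 = Fin g0 ->
  exists z gz, G z = Fin gz /\ gz + k * vnorm (vsub z x0) <= g0 /\
    forall v gv, G v = Fin gv -> gz <= gv + k * vnorm (vsub v z).
Proof.
  intros Hx0.
  destruct (dependent_choice_seq (fun y => exists g, G y = Fin g) ekeland_step x0)
    as [xs [Exs0 Hxs]]; [eauto| |].
  { intros n y [gy Hy]. destruct (ekeland_step_exists n y gy Hy) as [v Hv].
    exists v. split; [|exact Hv]. destruct Hv as [[gv [Gv _]] _]. eauto. }
  assert (step : forall n, ekeland_step n (xs n) (xs (S n))) by (intros n; apply Hxs).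
  destruct (vcomplete xs (ekeland_cauchy xs step)) as [z Hz].
  pose proof (ekeland_limit_mem xs step z (proj1 (Hxs O)) Hz) as Zin.
  destruct (Zin O) as [gz [Gz Hgz]]. rewrite Exs0, Hx0 in Hgz. simpl in Hgz.
  exists z, gz. split; [exact Gz|]. split; [exact Hgz|].
  intros v gv Gv. apply Rnot_lt_le. intro Hlt.
  assert (Sv : ekeland_set z v) by (exists gv; split; [exact Gv|]; rewrite Gz; simpl; lra).
  assert (Ev : v = z).
  { apply (ekeland_limit_unique xs step); [|exact Zin].
    intros n. eapply ekeland_set_trans; [apply Zin|exact Sv]. }
  subst v. rewrite Gz in Gv. injection Gv as ->. rewrite vnorm_sub_diag in Hlt. lra.
Qed.

End Ekeland.

(** * Subdifferentials *)

Section SubdifferentialBall.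
Context {X : Banach}.

Lemma dclosure_of_mem (C : (X -> R) -> Prop) phi : is_dual phi -> C phi -> dclosure C phi.
Proof.
  intros D Hphi. split; [exact D|]. intros r Hr. exists phi. split; [exact Hphi|].
  apply dnorm_lt with 0; [now apply dsub_dual|lra|exact Hr|].
  intros x. unfold dsub. rewrite Rminus_diag, Rabs_R0. pose proof (vnorm_nonneg x). lra.
Qed.

Lemma subdiff_closed (f : X -> ER) x psi : dclosure (subdiff f x) psi -> subdiff f x psi.
Proof.
  intros [Dpsi Hcl]. split; [exact Dpsi|].
  destruct (Hcl 1 ltac:(lra)) as [psi1 [[_ [fx [Hfx _]]] _]].
  exists fx. split; [exact Hfx|]. intros u. destruct (f u) as [fu|] eqn:Hfu; [|trivial].
  apply Rnot_lt_le. intro Hlt.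
  set (d := psi (vsub u x) - (fu - fx)). set (c := vnorm (vsub u x)).
  assert (Hc : 0 <= c) by apply vnorm_nonneg.
  assert (Hr : 0 < d / (c + 1)) by (apply Rdiv_lt_0_compat; unfold d; lra).
  destruct (Hcl _ Hr) as [psi' [[D' [fx' [Hfx' Hsub]]] Hlt']].
  rewrite Hfx in Hfx'. injection Hfx' as <-.
  specialize (Hsub u). rewrite Hfu in Hsub.
  destruct (dnorm_spec _ (dsub_dual _ _ D' Dpsi)) as [c' [Hc' [_ [Hb _]]]].
  rewrite Hc' in Hlt'. simpl in Hlt'.
  specialize (Hb (vsub u x)). apply Rabs_le_inv in Hb. unfold dsub in Hb. fold c in Hb.
  pose proof (small_mult_lt d c c' ltac:(unfold d; lra) Hc ltac:(lra)).
  unfold d in *. nra.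
Qed.

Lemma interior_ball (C : (X -> R) -> Prop) : dinterior C dzero -> exists r, 0 < r /\
  forall psi, is_dual psi -> (forall x, Rabs (psi x) <= r * vnorm x) -> C psi.
Proof.
  intros [_ [r [Hr H]]]. exists (r / 2). split; [lra|]. intros psi D Hb. apply H; [exact D|].
  apply dnorm_lt with (r / 2); [apply dsub_dual; [exact D|apply dzero_dual]|lra|lra|].
  intros x. unfold dsub, dzero. rewrite Rminus_0_r. apply Hb.
Qed.

Lemma dscal_sub_close (psi : X -> R) cp t s r :
  is_dual psi -> 0 <= cp -> (forall w, Rabs (psi w) <= cp * vnorm w) ->
  0 < r -> Rabs (t - s) <= r / (cp + 1) ->
  elt (dnorm (dsub (dscal t psi) (dscal s psi))) (Fin r).
Proof.
  intros Dpsi Hcp Hb Hr Hts.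
  apply dnorm_lt with (Rabs (t - s) * cp).
  - apply dsub_dual; apply dscal_dual; exact Dpsi.
  - apply Rmult_le_pos; [apply Rabs_pos|exact Hcp].
  - now apply small_mult_lt.
  - intros w. unfold dsub, dscal. replace (t * psi w - s * psi w) with ((t - s) * psi w) by ring.
    rewrite Rabs_mult, Rmult_assoc. apply Rmult_le_compat_l; [apply Rabs_pos|apply Hb].
Qed.

Lemma dinterior_dscal_step (C : (X -> R) -> Prop) psi cp s :
  is_dual psi -> 0 <= cp -> (forall w, Rabs (psi w) <= cp * vnorm w) ->
  dinterior C (dscal s psi) -> s < 1 -> exists t, s < t <= 1 /\ C (dscal t psi).
Proof.
  intros Dpsi Hcp Hb [_ [r [Hr Hball]]] Hs.
  assert (Hq : 0 < r / (cp + 1)) by (apply Rdiv_lt_0_compat; lra).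
  set (t := Rmin 1 (s + r / (cp + 1))).
  assert (Ht1 : s < t) by (unfold t; apply Rmin_glb_lt; lra).
  assert (Ht2 : t - s <= r / (cp + 1)) by (unfold t; pose proof (Rmin_r 1 (s + r / (cp + 1))); lra).
  exists t. split; [split; [exact Ht1|apply Rmin_l]|].
  apply Hball; [now apply dscal_dual|].
  apply dscal_sub_close with cp; auto. rewrite Rabs_right; lra.
Qed.

(** If [0] is interior to [df(x)], the whole open ball of radius [d(0, bd df(x))]
    lies in [df(x)]: along the segment [t psi], [t in [0,1]], the last point of
    [df(x)] is in [df(x)] (closedness), and cannot be a boundary point. *)
Lemma subdiff_ball_of_bd (f : X -> ER) x b psi cp :
  dinterior (subdiff f x) dzero -> ddist0 (dboundary (subdiff f x)) = Fin b ->
  is_dual psi -> 0 <= cp -> (forall w, Rabs (psi w) <= cp * vnorm w) -> cp < b ->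
  subdiff f x psi.
Proof.
  intros Hint Hbd Dpsi Hcp Hb Hlt. set (C := subdiff f x). fold C in Hint, Hbd.
  destruct (interior_ball C Hint) as [r0 [Hr0 Hball]].
  set (E := fun t => 0 <= t <= 1 /\ C (dscal t psi)).
  assert (E0 : E 0).
  { split; [lra|]. apply Hball; [now apply dscal_dual|]. intros y. unfold dscal.
    rewrite Rmult_0_l, Rabs_R0. pose proof (vnorm_nonneg y). nra. }
  destruct (completeness E ltac:(exists 1; intros t [Ht _]; lra) (ex_intro _ 0 E0))
    as [s0 [Hs1 Hs2]].
  assert (Hs0 : 0 <= s0 <= 1) by (split; [apply Hs1, E0|apply Hs2; intros t [Ht _]; lra]).
  assert (Ds0 : is_dual (dscal s0 psi)) by now apply dscal_dual.
  assert (Cs0 : C (dscal s0 psi)).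
  { apply subdiff_closed. split; [exact Ds0|]. intros r Hr.
    assert (Ex : exists t, E t /\ s0 - r / (cp + 1) < t).
    { assert (Hq : 0 < r / (cp + 1)) by (apply Rdiv_lt_0_compat; lra).
      apply NNPP. intro HN. enough (s0 <= s0 - r / (cp + 1)) by lra.
      apply Hs2. intros t Et. apply Rnot_lt_le. intro. apply HN. eauto. }
    destruct Ex as [t [[Ht Ct] Hts]]. exists (dscal t psi). split; [exact Ct|].
    apply dscal_sub_close with cp; auto.
    assert (t <= s0) by (apply Hs1; split; assumption). rewrite Rabs_left1; lra. }
  destruct (classic (dinterior C (dscal s0 psi))) as [Hi|Hni].
  - destruct (Req_dec s0 1) as [->|E1].
    + replace psi with (dscal 1 psi); [exact Cs0|].
      apply functional_extensionality. intros; unfold dscal; ring.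
    + exfalso.
      destruct (dinterior_dscal_step C psi cp s0 Dpsi Hcp Hb Hi ltac:(lra)) as [t [Ht Ct]].
      assert (t <= s0) by (apply Hs1; split; [lra|exact Ct]). lra.
  - exfalso.
    assert (Hbd0 : dboundary C (dscal s0 psi)) by (split; [now apply dclosure_of_mem|exact Hni]).
    pose proof (ddist0_le (dboundary C) _ (dboundary_dual C) Hbd0) as Hle.
    rewrite Hbd in Hle.
    destruct (dnorm_le (dscal s0 psi) (s0 * cp) Ds0 ltac:(nra)) as [c [Hc Hcle]].
    { intros w. unfold dscal. rewrite Rabs_mult, Rabs_right, Rmult_assoc by lra.
      apply Rmult_le_compat_l; [lra|apply Hb]. }
    rewrite Hc in Hle. simpl in Hle. nra.
Qed.

Lemma sharp_growth (f : X -> ER) x fx T : 0 <= T -> f x = Fin fx ->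
  (forall psi, is_dual psi -> (forall w, Rabs (psi w) <= T * vnorm w) -> subdiff f x psi) ->
  forall v fv, f v = Fin fv -> T * vnorm (vsub v x) <= fv - fx.
Proof.
  intros HT Hfx H v fv Hfv.
  destruct (norming_functional (vsub v x)) as [psi0 [D0 [B0 E0]]].
  assert (Hs : subdiff f x (dscal T psi0)).
  { apply H; [now apply dscal_dual|]. intros w. unfold dscal. rewrite Rabs_mult, Rabs_right by lra.
    apply Rmult_le_compat_l; [lra|apply B0]. }
  destruct Hs as [_ [fx' [Hfx' Hsub]]]. rewrite Hfx in Hfx'. injection Hfx' as <-.
  specialize (Hsub v). rewrite Hfv in Hsub. unfold dscal in Hsub. rewrite E0 in Hsub. exact Hsub.
Qed.

End SubdifferentialBall.

(** * Convex functions *)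

Lemma nonpos_of_le_small_mult (a K : R) : 0 <= K -> (forall t, 0 < t <= 1 -> a <= t * K) -> a <= 0.
Proof.
  intros HK H. apply Rnot_lt_le. intros Ha.
  set (t := Rmin 1 (a / (K + 1))).
  assert (Ht : 0 < t <= 1)
    by (split; [apply Rmin_glb_lt; [lra|apply Rdiv_lt_0_compat; lra]|apply Rmin_l]).
  pose proof (small_mult_lt a K t Ha HK (Rmin_r _ _)). specialize (H t Ht). lra.
Qed.

Section ConvexFunctions.
Context {X : Banach}.

(** [v] is a convex combination of [w] and a far point [a] on the ray from [w] through [v];
    calmness at [x] bounds [p a], and the error term vanishes as [t -> 0]. *)
Lemma convex_calm_lipschitz (p : X -> R) x xi : convexR p -> 0 <= xi ->
  (forall u, Rabs (p u - p x) <= xi * vnorm (vsub u x)) ->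
  forall v w, p v - p w <= xi * vnorm (vsub v w).
Proof.
  intros Cp Hxi Hcalm v w.
  set (K := Rabs (p x - p w + xi * vnorm (vsub w x))).
  enough (p v - p w - xi * vnorm (vsub v w) <= 0) by lra.
  apply nonpos_of_le_small_mult with K; [apply Rabs_pos|]. intros t Ht.
  set (a := vadd w (vscal (/ t) (vsub v w))).
  assert (Ev : v = vadd (vscal t a) (vscal (1 - t) w)) by (unfold a; vring; field; lra).
  pose proof (Cp a w t ltac:(lra)) as C. rewrite <- Ev in C.
  pose proof (Rabs_le_inv _ _ (Hcalm a)) as Ca.
  assert (Na : vnorm (vsub a x) <= vnorm (vsub w x) + / t * vnorm (vsub v w)).
  { replace (vsub a x) with (vadd (vsub w x) (vscal (/ t) (vsub v w))) by (unfold a; vring).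
    eapply Rle_trans; [apply vnorm_triangle|].
    rewrite vnorm_scal, Rabs_right; [lra|]. left. apply Rinv_0_lt_compat. lra. }
  assert (HK : p x - p w + xi * vnorm (vsub w x) <= K) by apply Rle_abs.
  assert (p a <= p x + xi * vnorm (vsub w x) + xi * (/ t * vnorm (vsub v w))) by nra.
  assert (t * (xi * (/ t * vnorm (vsub v w))) = xi * vnorm (vsub v w)) by (field; lra).
  nra.
Qed.

Lemma convexE_add (f g : X -> ER) (p : X -> R) : convexE f -> convexR p ->
  (forall u, g u = eaddR (f u) (p u)) -> convexE g.
Proof.
  intros Cf Cp Hg v w gv gw t Hv Hw Ht. rewrite Hg in Hv, Hw |- *.
  destruct (f v) as [fv|] eqn:Hfv; [|discriminate].
  destruct (f w) as [fw|] eqn:Hfw; [|discriminate].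
  simpl in Hv, Hw. injection Hv as <-. injection Hw as <-.
  pose proof (Cf v w fv fw t Hfv Hfw Ht) as C. pose proof (Cp v w t Ht) as C2.
  destruct (f (vadd (vscal t v) (vscal (1 - t) w))); simpl in C |- *; [lra|contradiction].
Qed.

Lemma lscE_add_lipschitz (f g : X -> ER) (p : X -> R) L : lscE f -> 0 <= L ->
  (forall v w, p v - p w <= L * vnorm (vsub v w)) ->
  (forall u, g u = eaddR (f u) (p u)) -> lscE g.
Proof.
  intros Lf HL Lp Hg v c Hc. rewrite Hg in Hc.
  set (del := match f v with Fin fv => fv + p v - c | PInf => 1 end).
  assert (Hdel : 0 < del) by (unfold del; destruct (f v); simpl in Hc; lra).
  assert (Hf1 : elt (Fin (c - p v + del / 2)) (f v))
    by (unfold del; destruct (f v); simpl in *; [lra|exact I]).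
  destruct (Lf v _ Hf1) as [d [Hd Hnb]].
  assert (Hq : 0 < del / 2 / (L + 1)) by (apply Rdiv_lt_0_compat; lra).
  exists (Rmin d (del / 2 / (L + 1))). split; [now apply Rmin_pos|].
  intros u Hu. rewrite Hg.
  specialize (Hnb u (Rlt_le_trans _ _ _ Hu (Rmin_l _ _))).
  assert (HLu : vnorm (vsub u v) * L < del / 2).
  { apply small_mult_lt; [lra|exact HL|]. pose proof (Rmin_r d (del / 2 / (L + 1))). lra. }
  destruct (f u) as [fu|]; simpl in *; [|exact I].
  pose proof (Lp v u) as L1. rewrite vnorm_sub_sym in L1. lra.
Qed.

Definition pos_part (g : X -> ER) : X -> ER :=
  fun v => match g v with Fin a => Fin (Rmax a 0) | PInf => PInf end.

Lemma pos_part_nonneg (g : X -> ER) v : ele (Fin 0) (pos_part g v).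
Proof. unfold pos_part. destruct (g v); simpl; [apply Rmax_r|trivial]. Qed.

Lemma pos_part_pos (g : X -> ER) v a : g v = Fin a -> 0 <= a -> pos_part g v = Fin a.
Proof. intros H Ha. unfold pos_part. now rewrite H, Rmax_left. Qed.

Lemma lscE_pos_part (g : X -> ER) : lscE g -> lscE (pos_part g).
Proof.
  intros Lg v c Hc. destruct (Rlt_dec c 0) as [Hneg|Hnn].
  - exists 1. split; [lra|]. intros u _. pose proof (pos_part_nonneg g u) as H0.
    destruct (pos_part g u); simpl in *; [lra|trivial].
  - assert (Hc' : elt (Fin c) (g v)).
    { unfold pos_part in Hc. destruct (g v) as [a|]; simpl in *; [|trivial].
      unfold Rmax in Hc. destruct (Rle_dec a 0); lra. }
    destruct (Lg v c Hc') as [d [Hd Hnb]]. exists d. split; [exact Hd|].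
    intros u Hu. specialize (Hnb u Hu). unfold pos_part.
    destruct (g u) as [a|]; simpl in *; [|trivial]. pose proof (Rmax_l a 0). lra.
Qed.

Lemma convex_local_min_global (g : X -> ER) k z gz d : convexE g -> g z = Fin gz -> 0 < d ->
  (forall v gv, vnorm (vsub v z) < d -> g v = Fin gv -> gz <= gv + k * vnorm (vsub v z)) ->
  forall w gw, g w = Fin gw -> gz <= gw + k * vnorm (vsub w z).
Proof.
  intros Cg Hgz Hd Hloc w gw Hgw.
  set (c := vnorm (vsub w z)). assert (Hc : 0 <= c) by apply vnorm_nonneg.
  set (t := Rmin 1 (d / (c + 1))).
  assert (Ht : 0 < t <= 1)
    by (split; [apply Rmin_glb_lt; [lra|apply Rdiv_lt_0_compat; lra]|apply Rmin_l]).
  set (vt := vadd (vscal t w) (vscal (1 - t) z)).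
  assert (Nvt : vnorm (vsub vt z) = t * c).
  { replace (vsub vt z) with (vscal t (vsub w z)) by (unfold vt; vring).
    now rewrite vnorm_scal, Rabs_right by lra. }
  assert (Hvt : vnorm (vsub vt z) < d)
    by (rewrite Nvt; apply small_mult_lt; [lra|exact Hc|apply Rmin_r]).
  pose proof (Cg w z gw gz t Hgw Hgz ltac:(lra)) as Cv. fold vt in Cv.
  destruct (g vt) as [a|] eqn:Hga; simpl in Cv; [|contradiction].
  specialize (Hloc vt a Hvt Hga). rewrite Nvt in Hloc.
  enough (t * gz <= t * (gw + k * c)) by (apply Rmult_le_reg_l with t; lra).
  nra.
Qed.

(** If [g(x1) < k d(x1, S_g)], Ekeland's principle applied to [max(g, 0)] yields a point
    outside [S_g] where [g + k |. - z|] is minimal, hence a subgradient of norm [<= k]. *)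
Lemma small_subgradient_off_sublevel (g : X -> ER) k x1 gx r :
  convexE g -> lscE g -> 0 < k -> g x1 = Fin gx -> 0 < gx -> gx < k * r ->
  (forall s, sublevel g s -> r <= vnorm (vsub s x1)) ->
  exists z gz phi, g z = Fin gz /\ 0 < gz /\ subdiff g z phi /\
                   forall w, Rabs (phi w) <= k * vnorm w.
Proof.
  intros Cg Lg Hk Hgx Hgx0 Hkr Hdist.
  destruct (ekeland (pos_part g) k Hk (pos_part_nonneg g) (lscE_pos_part g Lg) x1 gx
              (pos_part_pos g x1 gx Hgx (Rlt_le _ _ Hgx0))) as [z [gz' [HGz [Hz1 Hz2]]]].
  assert (Hnz : ~ sublevel g z).
  { intro Hsz. specialize (Hdist z Hsz). pose proof (pos_part_nonneg g z) as H0.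
    rewrite HGz in H0. simpl in H0. nra. }
  unfold sublevel in Hnz. unfold pos_part in HGz.
  destruct (g z) as [gz|] eqn:Hgz; [|discriminate]. simpl in Hnz. injection HGz as HGz.
  rewrite Rmax_left in HGz by lra. subst gz'.
  destruct (Lg z 0 ltac:(rewrite Hgz; simpl; lra)) as [d [Hd Hnb]].
  assert (Gmin : forall w gw, g w = Fin gw -> gz <= gw + k * vnorm (vsub w z)).
  { apply (convex_local_min_global g k z gz d Cg Hgz Hd).
    intros v gv Hv Hgv. specialize (Hnb v Hv). rewrite Hgv in Hnb. simpl in Hnb.
    apply Hz2. apply pos_part_pos; [exact Hgv|lra]. }
  destruct (subdiff_sum_lipschitz g (fun w => k * vnorm (vsub w z)) k z gz dzero Cg)
    as [zz [Dzz [Bzz Szz]]].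
  - intros v w t Ht.
    replace (vsub (vadd (vscal t v) (vscal (1 - t) w)) z)
      with (vadd (vscal t (vsub v z)) (vscal (1 - t) (vsub w z))) by vring.
    pose proof (vnorm_convex_comb (vsub v z) (vsub w z) t Ht). nra.
  - intros v w. pose proof (vnorm_sub_triangle v w z). nra.
  - exact Hgz.
  - apply dzero_dual.
  - intros w gw Hgw. unfold dzero. rewrite vnorm_sub_diag. specialize (Gmin w gw Hgw). lra.
  - exists z, gz, (dsub dzero zz). split; [exact Hgz|]. split; [lra|]. split; [exact Szz|].
    intros w. unfold dsub, dzero. rewrite Rminus_0_l, Rabs_Ropp. apply Bzz.
Qed.

Lemma ediv_nonneg a d : 0 < a -> ele (Fin 0) (ediv a d).
Proof.
  intros Ha. destruct d as [r|]; simpl; [|lra].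
  destruct (Rlt_dec 0 r); simpl; [|trivial]. apply Rlt_le, Rdiv_lt_0_compat; assumption.
Qed.

Lemma Er_ge (g : X -> ER) (c : R) : (exists s, sublevel g s) ->
  (forall x1 gx r, g x1 = Fin gx -> 0 < gx -> 0 < r ->
     (forall s, sublevel g s -> r <= vnorm (vsub s x1)) -> c * r <= gx) ->
  ele (Fin c) (Er g).
Proof.
  intros [s Hs] H.
  apply einf_ge; [intros y [x1 [gx [_ [Hgx0 ->]]]]; now apply ediv_nonneg|].
  intros y [x1 [gx [Hgx [Hgx0 ->]]]].
  set (DS := fun y => exists s', sublevel g s' /\ y = Fin (vnorm (vsub s' x1))).
  assert (DS0 : nonneg_set DS) by (intros y [s' [_ ->]]; apply vnorm_nonneg).
  assert (Hlb : forall s', sublevel g s' -> ele (einf DS) (Fin (vnorm (vsub s' x1))))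
    by (intros s' Hs'; apply einf_le; [exact DS0|exists s'; auto]).
  unfold Defs.dist. fold DS.
  pose proof (Hlb s Hs) as Hds.
  destruct (einf DS) as [r|]; simpl in Hds; [|contradiction].
  simpl. destruct (Rlt_dec 0 r) as [Hr|Hr]; simpl; [|trivial].
  specialize (H x1 gx r Hgx Hgx0 Hr Hlb).
  apply Rmult_le_reg_r with r; [exact Hr|]. unfold Rdiv. rewrite Rmult_assoc, Rinv_l by lra. lra.
Qed.

End ConvexFunctions.

(** * The perturbation estimates *)

Section InteriorCase.
Context {X : Banach} (f : X -> ER) (x : X).
Hypothesis fx0 : f x = Fin 0.
Hypothesis int0 : dinterior (subdiff f x) dzero.

Lemma zero_unique_of_interior v : f v = Fin 0 -> v = x.
Proof.
  intros Hv. destruct (interior_ball _ int0) as [r [Hr Hball]].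
  pose proof (sharp_growth f x 0 r ltac:(lra) fx0 Hball v 0 Hv).
  apply vnorm_sub_eq0. pose proof (vnorm_nonneg (vsub v x)). nra.
Qed.

Lemma bdsub_of_interior : bdsub f = ddist0 (dboundary (subdiff f x)).
Proof.
  assert (H0 : nonneg_set
                (fun y => exists x', f x' = Fin 0 /\ y = ddist0 (dboundary (subdiff f x'))))
    by (intros y [x' [_ ->]]; apply ddist0_ge0, dboundary_dual).
  apply ele_antisym.
  - apply einf_le; [exact H0|]. exists x. auto.
  - apply einf_ge; [exact H0|]. intros y [x' [Hx' ->]].
    rewrite (zero_unique_of_interior x' Hx'). apply ele_refl.
Qed.

Lemma sharp_growth_of_interior b : ddist0 (dboundary (subdiff f x)) = Fin b ->
  forall T v fv, 0 <= T < b -> f v = Fin fv -> T * vnorm (vsub v x) <= fv.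
Proof.
  intros Hb T v fv HT Hfv. rewrite <- (Rminus_0_r fv).
  apply (sharp_growth f x 0 T); [lra|exact fx0| |exact Hfv].
  intros psi D B. apply (subdiff_ball_of_bd f x b psi T int0 Hb D); [lra|exact B|lra].
Qed.

End InteriorCase.

Section Perturbation.
Context {X : Banach} (f : X -> ER) (p : X -> R) (g : X -> ER) (x : X) (xi : R).
Hypothesis f_convex : convexE f.
Hypothesis p_convex : convexR p.
Hypothesis g_def : forall u, g u = eaddR (f u) (p u).
Hypothesis fx0 : f x = Fin 0.
Hypothesis xi_ge0 : 0 <= xi.
Hypothesis p_calm : forall u, Rabs (p u - p x) <= xi * vnorm (vsub u x).

Lemma perturbed_subgradient_split u gu phi cphi : g u = Fin gu -> subdiff g u phi ->
  dnorm phi = Fin cphi ->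
  exists fu y, f u = Fin fu /\ gu = fu + p u /\ subdiff f u y /\
               forall w, Rabs (y w) <= (cphi + xi) * vnorm w.
Proof.
  intros Hgu [Dphi [gu' [Hgu' Hsubg]]] Hcphi. rewrite Hgu in Hgu'. injection Hgu' as <-.
  rewrite g_def in Hgu. destruct (f u) as [fu|] eqn:Hfu; simpl in Hgu; [|discriminate].
  injection Hgu as <-.
  destruct (subdiff_sum_lipschitz f p xi u fu phi f_convex p_convex
              (convex_calm_lipschitz p x xi p_convex xi_ge0 p_calm) Hfu Dphi)
    as [z [Dz [Bz Sy]]].
  { intros w Fw HFw. specialize (Hsubg w). rewrite g_def, HFw in Hsubg. simpl in Hsubg. lra. }
  destruct (dnorm_spec phi Dphi) as [c [Hc [_ [Bphi _]]]]. rewrite Hcphi in Hc. injection Hc as <-.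
  exists fu, (dsub phi z). split; [reflexivity|]. split; [reflexivity|]. split; [exact Sy|].
  intros w. unfold dsub, Rminus. eapply Rle_trans; [apply Rabs_triang|]. rewrite Rabs_Ropp.
  specialize (Bphi w). specialize (Bz w). lra.
Qed.

Lemma subgradient_bound_interior b u gu phi cphi :
  dinterior (subdiff f x) dzero -> ddist0 (dboundary (subdiff f x)) = Fin b -> xi < b ->
  (exists s, sublevel g s) -> g u = Fin gu -> 0 < gu -> subdiff g u phi ->
  dnorm phi = Fin cphi -> b - xi <= cphi.
Proof.
  intros Hint Hb Hxib [s Hs] Hgu Hgu0 Hphi Hcphi.
  pose proof (sharp_growth_of_interior f x fx0 Hint b Hb) as Sharp.
  destruct (perturbed_subgradient_split u gu phi cphi Hgu Hphi Hcphi)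
    as [fu [y [Hfu [-> [[_ [fu' [Hfu' Hsuby]]] By]]]]].
  rewrite Hfu in Hfu'. injection Hfu' as <-.
  pose proof (dnorm_ge0 phi (subdiff_dual _ _ _ Hphi)) as Hc0. rewrite Hcphi in Hc0. simpl in Hc0.
  apply Rnot_lt_le. intro Hlt.
  destruct (Req_dec (vnorm (vsub u x)) 0) as [H0|H0].
  - (* then [p x = g x > 0], and [f] grows faster than [p] can decrease: [g > 0] on all of X *)
    apply vnorm_sub_eq0 in H0. subst u. rewrite fx0 in Hfu. injection Hfu as <-.
    unfold sublevel in Hs. rewrite g_def in Hs.
    destruct (f s) as [fs|] eqn:Hfs; simpl in Hs; [|contradiction].
    pose proof (Sharp ((xi + b) / 2) s fs ltac:(lra) Hfs) as H1.
    pose proof (Rabs_le_inv _ _ (p_calm s)) as H2.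
    pose proof (vnorm_nonneg (vsub s x)). nra.
  - pose proof (vnorm_nonneg (vsub u x)) as Hn.
    specialize (Hsuby x). rewrite fx0 in Hsuby.
    pose proof (Rabs_le_inv _ _ (By (vsub x u))) as H1. rewrite vnorm_sub_sym in H1.
    pose proof (Sharp ((cphi + xi + b) / 2) u fu ltac:(lra) Hfu) as H2.
    assert (0 < ((cphi + xi + b) / 2 - (cphi + xi)) * vnorm (vsub u x))
      by (apply Rmult_lt_0_compat; lra).
    lra.
Qed.

Lemma subgradient_bound_noninterior u gu phi cphi :
  ~ dinterior (subdiff f x) dzero -> g u = Fin gu -> 0 < gu -> subdiff g u phi ->
  dnorm phi = Fin cphi -> ele (tau f x xi (Rabs (p x))) (Fin (cphi + xi)).
Proof.
  intros Hnint Hgu Hgu0 Hphi Hcphi.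
  destruct (perturbed_subgradient_split u gu phi cphi Hgu Hphi Hcphi)
    as [fu [y [Hfu [-> [Sy By]]]]].
  unfold tau. destruct (excluded_middle_informative _) as [Hint|_]; [contradiction|].
  apply ele_trans with (ddist0 (subdiff f u)).
  - apply einf_le.
    + intros t [u' [_ ->]]. apply ddist0_ge0. intros psi. apply subdiff_dual.
    + exists u. split; [|reflexivity]. rewrite Hfu. simpl.
      pose proof (Rabs_le_inv _ _ (p_calm u)). pose proof (Rle_abs (p x)). lra.
  - apply ele_trans with (dnorm y); [apply ddist0_le; [intros psi; apply subdiff_dual|exact Sy]|].
    pose proof (subdiff_dual _ _ _ Sy) as Dy.
    pose proof (dnorm_ge0 phi (subdiff_dual _ _ _ Hphi)) as Hc0. rewrite Hcphi in Hc0. simpl in Hc0.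
    destruct (dnorm_le y (cphi + xi) Dy ltac:(lra) By) as [cy [-> Hcy]]. exact Hcy.
Qed.

End Perturbation.

Lemma Ptb_subgradient_bound {X : Banach} (f : X -> ER) (eps : R) :
  Gamma0 f -> elt (Fin eps) (bdsub f) ->
  forall g, Ptb f eps g -> forall u gu, g u = Fin gu -> 0 < gu ->
  forall phi, subdiff g u phi -> ele (esubR (bdsub f) eps) (dnorm phi).
Proof.
  intros [_ [Cf _]] Hbd g [Sg [p [Cp [Hg [x [xi [Hx0 [Hxi [Hptb Hcalm]]]]]]]]]
    u gu Hgu Hgu0 phi Hphi.
  destruct (bdsub f) as [b|] eqn:Hb; [|contradiction]. simpl in Hbd.
  destruct (dnorm_spec phi (subdiff_dual _ _ _ Hphi)) as [cphi [Hcphi _]]. rewrite Hcphi. simpl.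
  destruct (classic (dinterior (subdiff f x) dzero)) as [Hint|Hnint].
  - rewrite (bdsub_of_interior f x Hx0 Hint) in Hb.
    unfold tau in Hptb. destruct (excluded_middle_informative _); [|contradiction].
    rewrite Hb in Hptb. simpl in Hptb.
    pose proof (subgradient_bound_interior f p g x xi Cf Cp Hg Hx0 Hxi Hcalm b u gu phi cphi
                  Hint Hb ltac:(lra) Sg Hgu Hgu0 Hphi Hcphi). lra.
  - pose proof (subgradient_bound_noninterior f p g x xi Cf Cp Hg Hxi Hcalm u gu phi cphi
                  Hnint Hgu Hgu0 Hphi Hcphi) as Ht.
    destruct (tau f x xi (Rabs (p x))) as [t|]; simpl in Ht, Hptb; [lra|contradiction].
Qed.

Lemma Ptb_Er_bound {X : Banach} (f : X -> ER) (eps : R) :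
  Gamma0 f -> elt (Fin eps) (bdsub f) ->
  forall g, Ptb f eps g -> ele (esubR (bdsub f) eps) (Er g).
Proof.
  intros Gf Hbd g Pg.
  pose proof (Ptb_subgradient_bound f eps Gf Hbd g Pg) as Bound.
  destruct Gf as [_ [Cf Lf]].
  destruct Pg as [Sg [p [Cp [Hg [x [xi [Hx0 [Hxi [Hptb Hcalm]]]]]]]]].
  destruct (bdsub f) as [b|] eqn:Hb; [|contradiction]. simpl in Hbd |- *.
  pose proof (convex_calm_lipschitz p x xi Cp Hxi Hcalm) as Lp.
  apply Er_ge; [exact Sg|]. intros x1 gx r Hgx Hgx0 Hr Hdist.
  apply Rnot_lt_le. intro Hlt.
  set (k := (gx / r + (b + - eps)) / 2).
  assert (Hgr : gx / r < b + - eps).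
  { apply Rmult_lt_reg_r with r; [exact Hr|].
    unfold Rdiv. rewrite Rmult_assoc, Rinv_l by lra. lra. }
  assert (Hk : 0 < k) by (pose proof (Rdiv_lt_0_compat gx r Hgx0 Hr); unfold k; lra).
  assert (Hkr : gx < k * r).
  { replace gx with (gx / r * r) at 1 by (field; lra).
    apply Rmult_lt_compat_r; [lra|unfold k; lra]. }
  destruct (small_subgradient_off_sublevel g k x1 gx r (convexE_add f g p Cf Cp Hg)
              (lscE_add_lipschitz f g p xi Lf Hxi Lp Hg) Hk Hgx Hgx0 Hkr Hdist)
    as [z [gz [phi [Hgz [Hgz0 [Hphi Bphi]]]]]].
  specialize (Bound z gz Hgz Hgz0 phi Hphi).
  destruct (dnorm_le phi k (subdiff_dual _ _ _ Hphi) ltac:(lra) Bphi) as [c [Hc Hck]].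
  rewrite Hc in Bound. simpl in Bound. unfold k in Hck. lra.
Qed.

Theorem mainTheorem9 (X : Banach) (f : X -> ER) (eps : R) :
  Gamma0 f ->
  (exists x, sublevel f x) ->
  0 < eps ->
  elt (Fin eps) (bdsub f) ->
  (forall g, Ptb f eps g ->
     forall u gu, g u = Fin gu -> 0 < gu ->
     forall phi, subdiff g u phi -> ele (esubR (bdsub f) eps) (dnorm phi)) /\
  ele (esubR (bdsub f) eps) (ErPtb f eps) /\
  elt (Fin 0) (esubR (bdsub f) eps).
Proof.
  intros Gf _ _ Hbd. split; [|split].
  - exact (Ptb_subgradient_bound f eps Gf Hbd).
  - apply einf_ge.
    + intros y [g [_ ->]]. apply einf_ge0. intros t [x1 [gx [_ [Hgx0 ->]]]]. now apply ediv_nonneg.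
    + intros y [g [Pg ->]]. exact (Ptb_Er_bound f eps Gf Hbd g Pg).
  - destruct (bdsub f) as [b|]; simpl in *; [lra|trivial].
Qed.
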